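(* Let $N=1$, $A_0,A_1\in\mathbb{C}^{n\times n}$, $u_0\in\mathbb{C}^n$, $t\ge0$, $\varepsilon\in\mathbb{C}$ and $k\ge1$. Then $$\Big\|u(t,\varepsilon)-\sum_{\ell=0}^{k-1}\varepsilon^\ell c_\ell(t)\Big\|\le\frac{e^{t(\mu(A_0)+|\varepsilon|\|A_1\|)}\,\big(|\varepsilon|\,\|tA_1\|\big)^k}{k!}\,\|u_0\|.$$
   Context: $\|\cdot\|$ is the Euclidean norm and induced spectral norm. $u(t,\varepsilon):=\exp(t(A_0+\varepsilon A_1))u_0=\sum_{\ell\ge0}\varepsilon^\ell c_\ell(t)$ is the Taylor expansion in $\varepsilon$. $\mu(B):=\max\Lambda((B+B^* )/2)$ is the logarithmic norm. *)

From Stdlib Require Import Reals Lra Lia Arith Factorial.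
Open Scope R_scope.

Definition Cx : Type := (R * R)%type.
Definition C0 : Cx := (0, 0).
Definition RtoC (r : R) : Cx := (r, 0).
Definition Cadd (a b : Cx) : Cx := (fst a + fst b, snd a + snd b).
Definition Copp (a : Cx) : Cx := (- fst a, - snd a).
Definition Cmul (a b : Cx) : Cx :=
  (fst a * fst b - snd a * snd b, fst a * snd b + snd a * fst b).
Definition Cconj (a : Cx) : Cx := (fst a, - snd a).
Definition Cmod (a : Cx) : R := sqrt (fst a ^ 2 + snd a ^ 2).
Fixpoint Cpow (a : Cx) (k : nat) : Cx :=
  match k with O => RtoC 1 | S k' => Cmul a (Cpow a k') end.

Fixpoint Csum (N : nat) (f : nat -> Cx) : Cx :=
  match N with O => C0 | S N' => Cadd (Csum N' f) (f N') end.

(* Vectors in C^n: only the coordinates i < n are meaningful. *)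
Definition vec : Type := nat -> Cx.
Definition mat : Type := nat -> nat -> Cx.

Definition vadd (x y : vec) : vec := fun i => Cadd (x i) (y i).
Definition vsub (x y : vec) : vec := fun i => Cadd (x i) (Copp (y i)).
Definition vscal (a : Cx) (x : vec) : vec := fun i => Cmul a (x i).
Definition vzero : vec := fun _ => C0.
Fixpoint vsum (N : nat) (f : nat -> vec) : vec :=
  match N with O => vzero | S N' => vadd (vsum N' f) (f N') end.

Fixpoint Rsumsq (N : nat) (x : vec) : R :=
  match N with O => 0 | S N' => Rsumsq N' x + Cmod (x N') ^ 2 end.
Definition vnorm (n : nat) (x : vec) : R := sqrt (Rsumsq n x).

Definition madd (A B : mat) : mat := fun i j => Cadd (A i j) (B i j).
Definition mscal (a : Cx) (A : mat) : mat := fun i j => Cmul a (A i j).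
Definition mapply (n : nat) (A : mat) (x : vec) : vec :=
  fun i => Csum n (fun k => Cmul (A i k) (x k)).
Definition mmul (n : nat) (A B : mat) : mat :=
  fun i j => Csum n (fun k => Cmul (A i k) (B k j)).
Definition mid : mat := fun i j => if Nat.eqb i j then RtoC 1 else C0.
Fixpoint mpow (n : nat) (A : mat) (k : nat) : mat :=
  match k with O => mid | S k' => mmul n A (mpow n A k') end.
Definition madj (A : mat) : mat := fun i j => Cconj (A j i).

Definition Vcv (n : nat) (s : nat -> vec) (l : vec) : Prop :=
  forall eps : R, eps > 0 ->
    exists N : nat, forall m : nat, (m >= N)%nat -> vnorm n (vsub (s m) l) < eps.

Definition mexp_apply (n : nat) (M : mat) (v w : vec) : Prop :=
  Vcv n (fun N => vsum (S N)
           (fun j => vscal (RtoC (/ INR (fact j))) (mapply n (mpow n M j) v))) w.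

Definition is_opnorm (n : nat) (A : mat) (s : R) : Prop :=
  is_lub (fun r => exists x : vec, vnorm n x <= 1 /\ r = vnorm n (mapply n A x)) s.

Definition is_eigenvalue (n : nat) (H : mat) (lam : Cx) : Prop :=
  exists x : vec, (exists i, (i < n)%nat /\ x i <> C0) /\
    forall i, (i < n)%nat -> mapply n H x i = Cmul lam (x i).

(* logarithmic norm  mu(B) = max Lambda((B + B^* )/2)  (the spectrum of the
   Hermitian part is real; m is the largest eigenvalue) *)
Definition is_lognorm (n : nat) (B : mat) (m : R) : Prop :=
  let H := mscal (RtoC (/ 2)) (madd B (madj B)) in
  is_eigenvalue n H (RtoC m) /\
  forall lam : Cx, is_eigenvalue n H lam -> fst lam <= m.

(* The Taylor coefficients c_l of u(e) = exp(t (A0 + e A1)) u0 are the limits,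
   as m -> oo, of the coefficients of e^l in the Euler approximations
   (I + t (A0 + e A1) / m)^m u0: these converge to u(e) at rate O(1/m), and
   coefficients of power series are unique.  The coefficient of e^l is a sum of
   binom(m, l) products of l factors (t/m) A1 and m - l factors I + (t/m) A0.
   Since Re <A0 x, x> <= mu(A0) |x|^2 (the maximum of this quadratic form on the
   unit sphere is an eigenvalue of the Hermitian part), each such factor has
   norm at most exp((t/m) mu(A0) + O(1/m^2)), so in the limit
   |c_l| <= (t |A1|)^l / l! * exp(t mu(A0)) |u0|.  Summing |e|^l times this
   majorant over l >= k gives the remainder estimate. *)

From Stdlib Require Import Reals ZArith Lra Lia
  FunctionalExtensionality ClassicalEpsilon Classical.
From Coquelicot Require Complex ElemFct.
Open Scope R_scope.

Fixpoint Rsum (N : nat) (f : nat -> R) : R :=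
  match N with O => 0 | S N' => Rsum N' f + f N' end.

Lemma Rsum_ext (N : nat) (f g : nat -> R) :
  (forall i, (i < N)%nat -> f i = g i) -> Rsum N f = Rsum N g.
Proof.
  induction N as [|N IH]; simpl; intros H; auto.
  rewrite IH by (intros; apply H; lia). rewrite H by lia. reflexivity.
Qed.

Lemma Rsum_add (N : nat) (f g : nat -> R) :
  Rsum N (fun i => f i + g i) = Rsum N f + Rsum N g.
Proof. induction N; simpl; [lra|rewrite IHN; lra]. Qed.

Lemma Rsum_opp (N : nat) (f : nat -> R) : Rsum N (fun i => - f i) = - Rsum N f.
Proof. induction N; simpl; [lra|rewrite IHN; lra]. Qed.

Lemma Rsum_scal (N : nat) (a : R) (f : nat -> R) :
  Rsum N (fun i => a * f i) = a * Rsum N f.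
Proof. induction N; simpl; [lra|rewrite IHN; lra]. Qed.

Lemma Rsum_const (N : nat) (a : R) : Rsum N (fun _ => a) = INR N * a.
Proof. induction N; simpl Rsum; [simpl; ring|rewrite IHN, S_INR; ring]. Qed.

Lemma Rsum_le (N : nat) (f g : nat -> R) :
  (forall i, (i < N)%nat -> f i <= g i) -> Rsum N f <= Rsum N g.
Proof.
  induction N as [|N IH]; simpl; intros H; [lra|].
  assert (Rsum N f <= Rsum N g) by (apply IH; intros; apply H; lia).
  specialize (H N ltac:(lia)). lra.
Qed.

Lemma Rsum_nonneg (N : nat) (f : nat -> R) :
  (forall i, (i < N)%nat -> 0 <= f i) -> 0 <= Rsum N f.
Proof.
  intros H. replace 0 with (Rsum N (fun _ => 0)) by (rewrite Rsum_const; ring).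
  apply Rsum_le. auto.
Qed.

Lemma Rsum_term_le (N : nat) (f : nat -> R) (i : nat) :
  (forall j, (j < N)%nat -> 0 <= f j) -> (i < N)%nat -> f i <= Rsum N f.
Proof.
  induction N as [|N IH]; simpl; intros H Hi; [lia|].
  assert (0 <= Rsum N f) by (apply Rsum_nonneg; intros; apply H; lia).
  destruct (Nat.eq_dec i N) as [->|Hne]; [lra|].
  assert (f i <= Rsum N f) by (apply IH; [intros; apply H; lia | lia]).
  specialize (H N ltac:(lia)). lra.
Qed.

Lemma Rsum_swap (N M : nat) (f : nat -> nat -> R) :
  Rsum N (fun i => Rsum M (f i)) = Rsum M (fun j => Rsum N (fun i => f i j)).
Proof.
  induction N; simpl.
  - change (0 = Rsum M (fun _ => 0)). rewrite Rsum_const. ring.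
  - rewrite IHN, <- Rsum_add. reflexivity.
Qed.

Lemma Rsum_delta (N i : nat) (g : nat -> R) :
  (i < N)%nat -> Rsum N (fun k => if Nat.eqb i k then g k else 0) = g i.
Proof.
  induction N as [|N IH]; intros Hi; [lia|]. cbn [Rsum].
  destruct (Nat.eq_dec i N) as [->|Hne].
  - rewrite Nat.eqb_refl, (Rsum_ext N _ (fun _ => 0)), Rsum_const; [ring|].
    intros k Hk. destruct (Nat.eqb_spec N k); [lia|auto].
  - rewrite IH by lia. destruct (Nat.eqb_spec i N); [lia|ring].
Qed.

Lemma Rsum_geom_le (r : R) (J : nat) :
  0 <= r <= 1/2 -> Rsum J (fun j => r ^ j) <= 2.
Proof.
  intros Hr. enough (Rsum J (fun j => r ^ j) <= 2 - 2 * r ^ J)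
    by (assert (0 <= r ^ J) by (apply pow_le; lra); lra).
  induction J; simpl; [lra|].
  assert (0 <= r ^ J) by (apply pow_le; lra). nra.
Qed.

Lemma Csum_fst (N : nat) (f : nat -> Cx) : fst (Csum N f) = Rsum N (fun k => fst (f k)).
Proof. induction N; simpl; auto. rewrite IHN. reflexivity. Qed.

Lemma Csum_snd (N : nat) (f : nat -> Cx) : snd (Csum N f) = Rsum N (fun k => snd (f k)).
Proof. induction N; simpl; auto. rewrite IHN. reflexivity. Qed.

Lemma Cx_ext (a b : Cx) : fst a = fst b -> snd a = snd b -> a = b.
Proof. destruct a, b; simpl; intros -> ->; reflexivity. Qed.

Ltac cxsimpl :=
  unfold vadd, vsub, vscal, vzero, Cadd, Cmul, Copp, C0, RtoC, Cconj in *; simpl.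
Ltac vext := apply functional_extensionality; intro; apply Cx_ext; cxsimpl; ring.

Lemma Cmod_sq (a : Cx) : Cmod a ^ 2 = fst a ^ 2 + snd a ^ 2.
Proof. unfold Cmod. rewrite pow2_sqrt; [ring|nra]. Qed.

Lemma Cmod_nonneg (a : Cx) : 0 <= Cmod a.
Proof. apply sqrt_pos. Qed.

Lemma Rabs_fst_le_Cmod (a : Cx) : Rabs (fst a) <= Cmod a.
Proof.
  rewrite <- sqrt_Rsqr_abs. apply sqrt_le_1_alt. unfold Rsqr. nra.
Qed.

Lemma Rabs_snd_le_Cmod (a : Cx) : Rabs (snd a) <= Cmod a.
Proof.
  rewrite <- sqrt_Rsqr_abs. apply sqrt_le_1_alt. unfold Rsqr. nra.
Qed.

Lemma pow2_le_reg (a b : R) : 0 <= b -> a ^ 2 <= b ^ 2 -> a <= b.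
Proof.
  intros Hb H. destruct (Rle_dec a 0); [lra|].
  apply Rsqr_incr_0_var; unfold Rsqr; lra.
Qed.

Lemma Cmod_mul (a b : Cx) : Cmod (Cmul a b) = Cmod a * Cmod b.
Proof.
  pose proof (Cmod_nonneg a). pose proof (Cmod_nonneg b).
  rewrite <- (sqrt_pow2 (Cmod a * Cmod b)) by nra. unfold Cmod at 1. f_equal.
  rewrite Rpow_mult_distr, !Cmod_sq. destruct a, b; unfold Cmul; simpl; ring.
Qed.

Lemma Cmod_RtoC (r : R) : Cmod (RtoC r) = Rabs r.
Proof. unfold Cmod, RtoC. simpl. rewrite <- sqrt_Rsqr_abs. f_equal. unfold Rsqr. ring. Qed.

Lemma Cmod_Cpow (e : Cx) (l : nat) : Cmod (Cpow e l) = Cmod e ^ l.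
Proof.
  induction l; simpl.
  - rewrite Cmod_RtoC. apply Rabs_R1.
  - rewrite Cmod_mul, IHl. reflexivity.
Qed.

Lemma Cpow_RtoC (r : R) (l : nat) : Cpow (RtoC r) l = RtoC (r ^ l).
Proof. induction l; simpl; [reflexivity|]. rewrite IHl. unfold Cmul, RtoC. simpl. f_equal; ring. Qed.

Lemma Cmod_triangle (a b : Cx) : Cmod (Cadd a b) <= Cmod a + Cmod b.
Proof. exact (Complex.Cmod_triangle a b). Qed.

Lemma Cmod_Csum (N : nat) (f : nat -> Cx) : Cmod (Csum N f) <= Rsum N (fun k => Cmod (f k)).
Proof.
  induction N; simpl.
  - rewrite <- (Rabs_R0), <- Cmod_RtoC. apply Rle_refl.
  - eapply Rle_trans; [apply Cmod_triangle|]. lra.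
Qed.

(* [vdot n x y] is the real part of the Hermitian inner product, i.e. the
   Euclidean inner product of C^n viewed as R^(2n). *)
Definition cdot (a b : Cx) : R := fst a * fst b + snd a * snd b.
Definition vdot (n : nat) (x y : vec) : R := Rsum n (fun i => cdot (x i) (y i)).

Lemma vdot_self_nonneg (n : nat) (x : vec) : 0 <= vdot n x x.
Proof. apply Rsum_nonneg. intros. unfold cdot. nra. Qed.

Lemma vnorm_sqrt (n : nat) (x : vec) : vnorm n x = sqrt (vdot n x x).
Proof.
  unfold vnorm, vdot. f_equal. induction n; cbn [Rsumsq Rsum]; auto.
  rewrite IHn, Cmod_sq. unfold cdot. ring.
Qed.

Lemma vnorm_sq (n : nat) (x : vec) : vnorm n x ^ 2 = vdot n x x.
Proof. rewrite vnorm_sqrt, pow2_sqrt; auto using vdot_self_nonneg. Qed.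

Lemma vnorm_nonneg (n : nat) (x : vec) : 0 <= vnorm n x.
Proof. apply sqrt_pos. Qed.

Lemma vdot_comm (n : nat) (x y : vec) : vdot n x y = vdot n y x.
Proof. apply Rsum_ext. intros. unfold cdot. ring. Qed.

Lemma vdot_ext (n : nat) (x x' y y' : vec) :
  (forall i, (i < n)%nat -> x i = x' i) -> (forall i, (i < n)%nat -> y i = y' i) ->
  vdot n x y = vdot n x' y'.
Proof. intros Hx Hy. apply Rsum_ext. intros. rewrite Hx, Hy by auto. reflexivity. Qed.

Lemma vnorm_ext (n : nat) (x y : vec) :
  (forall i, (i < n)%nat -> x i = y i) -> vnorm n x = vnorm n y.
Proof. intros H. rewrite !vnorm_sqrt. erewrite vdot_ext; eauto. Qed.

Lemma vdot_addl (n : nat) (x y z : vec) : vdot n (vadd x y) z = vdot n x z + vdot n y z.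
Proof. unfold vdot. rewrite <- Rsum_add. apply Rsum_ext. intros. unfold cdot. cxsimpl. ring. Qed.

Lemma vdot_subl (n : nat) (x y z : vec) : vdot n (vsub x y) z = vdot n x z - vdot n y z.
Proof.
  unfold vdot, Rminus. rewrite <- Rsum_opp, <- Rsum_add.
  apply Rsum_ext. intros. unfold cdot. cxsimpl. ring.
Qed.

Lemma vdot_scall (n : nat) (r : R) (x z : vec) :
  vdot n (vscal (RtoC r) x) z = r * vdot n x z.
Proof. unfold vdot. rewrite <- Rsum_scal. apply Rsum_ext. intros. unfold cdot. cxsimpl. ring. Qed.

Lemma vdot_addr (n : nat) (x y z : vec) : vdot n z (vadd x y) = vdot n z x + vdot n z y.
Proof. rewrite !(vdot_comm n z). apply vdot_addl. Qed.

Lemma vdot_subr (n : nat) (x y z : vec) : vdot n z (vsub x y) = vdot n z x - vdot n z y.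
Proof. rewrite !(vdot_comm n z). apply vdot_subl. Qed.

Lemma vdot_scalr (n : nat) (r : R) (x z : vec) :
  vdot n z (vscal (RtoC r) x) = r * vdot n z x.
Proof. rewrite !(vdot_comm n z). apply vdot_scall. Qed.

Lemma vnorm_scal (n : nat) (a : Cx) (x : vec) : vnorm n (vscal a x) = Cmod a * vnorm n x.
Proof.
  pose proof (Cmod_nonneg a). pose proof (vnorm_nonneg n x).
  rewrite vnorm_sqrt, <- (sqrt_pow2 (Cmod a * vnorm n x)) by nra. f_equal.
  rewrite Rpow_mult_distr, vnorm_sq, Cmod_sq. unfold vdot.
  rewrite <- Rsum_scal. apply Rsum_ext. intros. unfold cdot. cxsimpl. ring.
Qed.

Lemma vnorm_zero (n : nat) : vnorm n vzero = 0.
Proof.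
  rewrite <- (Rmult_0_l (vnorm n vzero)), <- (Rabs_R0), <- Cmod_RtoC, <- vnorm_scal.
  f_equal. vext.
Qed.

Lemma vnorm_eq0 (n : nat) (x : vec) : vnorm n x = 0 -> forall i, (i < n)%nat -> x i = C0.
Proof.
  intros H i Hi. rewrite vnorm_sqrt in H. apply sqrt_eq_0 in H; [|apply vdot_self_nonneg].
  assert (cdot (x i) (x i) <= 0).
  { rewrite <- H. apply (Rsum_term_le n (fun i => cdot (x i) (x i))); auto.
    intros. unfold cdot. nra. }
  unfold cdot in *. apply Cx_ext; simpl; nra.
Qed.

Lemma Cmod_coord_le (n : nat) (x : vec) (i : nat) : (i < n)%nat -> Cmod (x i) <= vnorm n x.
Proof.
  intros Hi. apply pow2_le_reg; [apply vnorm_nonneg|]. rewrite vnorm_sq, Cmod_sq.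
  replace (fst (x i) ^ 2 + snd (x i) ^ 2) with (cdot (x i) (x i)) by (unfold cdot; ring).
  apply (Rsum_term_le n (fun i => cdot (x i) (x i))); auto. intros. unfold cdot. nra.
Qed.

Lemma quadratic_nonneg_discriminant (a b c : R) :
  0 <= c -> (forall s, 0 <= a + 2 * b * s + c * s ^ 2) -> b ^ 2 <= a * c.
Proof.
  intros Hc H. destruct (Req_dec c 0) as [->|Hc0].
  - destruct (Req_dec b 0) as [->|Hb]; [lra|].
    specialize (H (- (a + 1) / (2 * b))).
    replace (a + 2 * b * (- (a + 1) / (2 * b)) + 0 * (- (a + 1) / (2 * b)) ^ 2) with (-1)
      in H by (field; auto). lra.
  - specialize (H (- b / c)).
    replace (a + 2 * b * (- b / c) + c * (- b / c) ^ 2) with ((a * c - b ^ 2) / c)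
      in H by (field; auto).
    assert (0 < c) by lra.
    apply (Rmult_le_compat_r c) in H; [|lra].
    unfold Rdiv in H. rewrite Rmult_assoc, Rinv_l, Rmult_0_l in H by lra. lra.
Qed.

Lemma vdot_Cauchy_Schwarz (n : nat) (x y : vec) :
  Rabs (vdot n x y) <= vnorm n x * vnorm n y.
Proof.
  pose proof (vnorm_nonneg n x). pose proof (vnorm_nonneg n y).
  apply pow2_le_reg; [nra|]. rewrite <- Rsqr_pow2, <- Rsqr_abs, Rsqr_pow2.
  rewrite Rpow_mult_distr, !vnorm_sq.
  apply quadratic_nonneg_discriminant; [apply vdot_self_nonneg|]. intros s.
  pose proof (vdot_self_nonneg n (vadd x (vscal (RtoC s) y))) as Hq.
  rewrite vdot_addl, !vdot_addr, !vdot_scall, !vdot_scalr, (vdot_comm n y x) in Hq. lra.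
Qed.

Lemma vnorm_triangle (n : nat) (x y : vec) : vnorm n (vadd x y) <= vnorm n x + vnorm n y.
Proof.
  pose proof (vnorm_nonneg n x). pose proof (vnorm_nonneg n y).
  pose proof (vdot_Cauchy_Schwarz n x y). pose proof (Rle_abs (vdot n x y)).
  apply pow2_le_reg; [lra|]. rewrite vnorm_sq, vdot_addl, !vdot_addr, (vdot_comm n y x).
  rewrite <- (vnorm_sq n x), <- (vnorm_sq n y). nra.
Qed.

Lemma vsub_vadd_opp (x y : vec) : vsub x y = vadd x (vscal (RtoC (-1)) y).
Proof. vext. Qed.

Lemma vnorm_opp (n : nat) (x : vec) : vnorm n (vscal (RtoC (-1)) x) = vnorm n x.
Proof. rewrite vnorm_scal, Cmod_RtoC, Rabs_left by lra. ring. Qed.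

Lemma vnorm_sub_le (n : nat) (x y : vec) : vnorm n (vsub x y) <= vnorm n x + vnorm n y.
Proof.
  rewrite vsub_vadd_opp. eapply Rle_trans; [apply vnorm_triangle|].
  rewrite vnorm_opp. lra.
Qed.

Lemma vnorm_sub_comm (n : nat) (x y : vec) : vnorm n (vsub x y) = vnorm n (vsub y x).
Proof.
  replace (vsub y x) with (vscal (RtoC (-1)) (vsub x y)) by vext.
  symmetry. apply vnorm_opp.
Qed.

Lemma vnorm_sub_triangle (n : nat) (x y z : vec) :
  vnorm n (vsub x z) <= vnorm n (vsub x y) + vnorm n (vsub y z).
Proof. replace (vsub x z) with (vadd (vsub x y) (vsub y z)) by vext. apply vnorm_triangle. Qed.

Lemma vnorm_reverse_triangle (n : nat) (x y : vec) :
  Rabs (vnorm n x - vnorm n y) <= vnorm n (vsub x y).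
Proof.
  pose proof (vnorm_triangle n (vsub x y) y) as H1.
  pose proof (vnorm_triangle n (vsub y x) x) as H2.
  replace (vadd (vsub x y) y) with x in H1 by vext.
  replace (vadd (vsub y x) x) with y in H2 by vext.
  rewrite (vnorm_sub_comm n y x) in H2. apply Rabs_le. lra.
Qed.

Lemma vnorm_vsum (n N : nat) (f : nat -> vec) :
  vnorm n (vsum N f) <= Rsum N (fun l => vnorm n (f l)).
Proof.
  induction N; simpl.
  - rewrite vnorm_zero. lra.
  - eapply Rle_trans; [apply vnorm_triangle|]. lra.
Qed.

Lemma Rsum_lin (N : nat) (a b : R) (f g : nat -> R) :
  a * Rsum N f + b * Rsum N g = Rsum N (fun k => a * f k + b * g k).
Proof. rewrite <- !Rsum_scal, <- Rsum_add. reflexivity. Qed.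

Lemma Rsum_linr (N : nat) (a b : R) (f g : nat -> R) :
  Rsum N f * a + Rsum N g * b = Rsum N (fun k => f k * a + g k * b).
Proof. rewrite (Rmult_comm _ a), (Rmult_comm _ b), Rsum_lin. apply Rsum_ext; intros; ring. Qed.

Lemma mapply_fst (n : nat) (A : mat) (x : vec) (i : nat) :
  fst (mapply n A x i) = Rsum n (fun k => fst (A i k) * fst (x k) - snd (A i k) * snd (x k)).
Proof. unfold mapply. rewrite Csum_fst. reflexivity. Qed.

Lemma mapply_snd (n : nat) (A : mat) (x : vec) (i : nat) :
  snd (mapply n A x i) = Rsum n (fun k => fst (A i k) * snd (x k) + snd (A i k) * fst (x k)).
Proof. unfold mapply. rewrite Csum_snd. reflexivity. Qed.

Ltac mapply_ext_tac := apply functional_extensionality; intro; apply Cx_ext;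
  cxsimpl; rewrite ?mapply_fst, ?mapply_snd; unfold mapply; rewrite ?Csum_fst, ?Csum_snd.

Lemma mapply_vadd (n : nat) (A : mat) (x y : vec) :
  mapply n A (vadd x y) = vadd (mapply n A x) (mapply n A y).
Proof. mapply_ext_tac; rewrite <- Rsum_add; apply Rsum_ext; intros; cxsimpl; ring. Qed.

Lemma mapply_vsub (n : nat) (A : mat) (x y : vec) :
  mapply n A (vsub x y) = vsub (mapply n A x) (mapply n A y).
Proof.
  mapply_ext_tac; unfold Rminus; rewrite <- Rsum_opp, <- Rsum_add;
    apply Rsum_ext; intros; cxsimpl; ring.
Qed.

Lemma mapply_vscal (n : nat) (A : mat) (a : Cx) (x : vec) :
  mapply n A (vscal a x) = vscal a (mapply n A x).
Proof.
  mapply_ext_tac; unfold Rminus; rewrite ?Ropp_mult_distr_l, ?Rsum_lin;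
    apply Rsum_ext; intros; cxsimpl; ring.
Qed.

Lemma mapply_vzero (n : nat) (A : mat) : mapply n A vzero = vzero.
Proof.
  mapply_ext_tac; rewrite (Rsum_ext _ _ (fun _ => 0)), Rsum_const; try ring;
    intros; cxsimpl; ring.
Qed.

Lemma mapply_madd (n : nat) (A B : mat) (x : vec) :
  mapply n (madd A B) x = vadd (mapply n A x) (mapply n B x).
Proof. mapply_ext_tac; rewrite <- Rsum_add; apply Rsum_ext; intros; unfold madd; cxsimpl; ring. Qed.

Lemma mapply_mscal (n : nat) (a : Cx) (A : mat) (x : vec) :
  mapply n (mscal a A) x = vscal a (mapply n A x).
Proof.
  mapply_ext_tac; unfold Rminus; rewrite ?Ropp_mult_distr_l, ?Rsum_lin;
    apply Rsum_ext; intros; unfold mscal; cxsimpl; ring.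
Qed.

Lemma mapply_ext (n : nat) (A : mat) (x y : vec) :
  (forall i, (i < n)%nat -> x i = y i) -> mapply n A x = mapply n A y.
Proof.
  intros H. apply functional_extensionality; intro i. apply Cx_ext;
    rewrite ?mapply_fst, ?mapply_snd; apply Rsum_ext; intros; rewrite H by auto; reflexivity.
Qed.

Lemma mapply_mid (n : nat) (x : vec) (i : nat) : (i < n)%nat -> mapply n mid x i = x i.
Proof.
  intros Hi. apply Cx_ext; rewrite ?mapply_fst, ?mapply_snd.
  - rewrite <- (Rsum_delta n i (fun k => fst (x k))) by auto.
    apply Rsum_ext. intros. unfold mid. destruct (Nat.eqb i i0); unfold RtoC, C0; simpl; ring.
  - rewrite <- (Rsum_delta n i (fun k => snd (x k))) by auto.
    apply Rsum_ext. intros. unfold mid. destruct (Nat.eqb i i0); unfold RtoC, C0; simpl; ring.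
Qed.

Lemma mapply_mmul (n : nat) (A B : mat) (x : vec) :
  mapply n (mmul n A B) x = mapply n A (mapply n B x).
Proof.
  apply functional_extensionality; intro i; apply Cx_ext;
    rewrite ?mapply_fst, ?mapply_snd; unfold mmul.
  - transitivity (Rsum n (fun k => Rsum n (fun j =>
       (fst (A i j) * fst (B j k) - snd (A i j) * snd (B j k)) * fst (x k)
       - (fst (A i j) * snd (B j k) + snd (A i j) * fst (B j k)) * snd (x k)))).
    + apply Rsum_ext; intros. rewrite Csum_fst, Csum_snd. unfold Rminus.
      rewrite Ropp_mult_distr_r, Rsum_linr. apply Rsum_ext; intros; simpl; ring.
    + rewrite Rsum_swap. apply Rsum_ext; intros. rewrite mapply_fst, mapply_snd.
      unfold Rminus. rewrite Ropp_mult_distr_l, Rsum_lin. apply Rsum_ext; intros; ring.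
  - transitivity (Rsum n (fun k => Rsum n (fun j =>
       (fst (A i j) * fst (B j k) - snd (A i j) * snd (B j k)) * snd (x k)
       + (fst (A i j) * snd (B j k) + snd (A i j) * fst (B j k)) * fst (x k)))).
    + apply Rsum_ext; intros. rewrite Csum_fst, Csum_snd, Rsum_linr.
      apply Rsum_ext; intros; simpl; ring.
    + rewrite Rsum_swap. apply Rsum_ext; intros. rewrite mapply_fst, mapply_snd, Rsum_lin.
      apply Rsum_ext; intros; ring.
Qed.

Lemma mapply_mpow (n : nat) (M : mat) (v : vec) (j i : nat) : (i < n)%nat ->
  mapply n (mpow n M j) v i = Nat.iter j (mapply n M) v i.
Proof.
  revert i. induction j; intros i Hi; simpl.
  - apply mapply_mid; auto.
  - rewrite mapply_mmul, (mapply_ext n M _ (Nat.iter j (mapply n M) v)); auto.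
Qed.

Lemma vdot_madj (n : nat) (A : mat) (x y : vec) :
  vdot n (mapply n A y) x = vdot n y (mapply n (madj A) x).
Proof.
  unfold vdot, cdot.
  transitivity (Rsum n (fun i => Rsum n (fun k =>
     (fst (A i k) * fst (y k) - snd (A i k) * snd (y k)) * fst (x i)
     + (fst (A i k) * snd (y k) + snd (A i k) * fst (y k)) * snd (x i)))).
  - apply Rsum_ext; intros. rewrite mapply_fst, mapply_snd, Rsum_linr. reflexivity.
  - rewrite Rsum_swap. apply Rsum_ext; intros. rewrite mapply_fst, mapply_snd, Rsum_lin.
    apply Rsum_ext; intros. unfold madj, Cconj. simpl. ring.
Qed.

(* An explicit operator-norm bound, available for every matrix (unlike an
   [is_opnorm] witness); only finiteness matters where it is used. *)
Definition mbound (n : nat) (A : mat) : R :=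
  sqrt (Rsum n (fun i => (Rsum n (fun k => Cmod (A i k))) ^ 2)).

Lemma mbound_nonneg (n : nat) (A : mat) : 0 <= mbound n A.
Proof. apply sqrt_pos. Qed.

Lemma vnorm_mapply_le (n : nat) (A : mat) (x : vec) :
  vnorm n (mapply n A x) <= mbound n A * vnorm n x.
Proof.
  pose proof (vnorm_nonneg n x).
  assert (Hrow : forall i, Cmod (mapply n A x i) <= Rsum n (fun k => Cmod (A i k)) * vnorm n x).
  { intros i. eapply Rle_trans; [apply Cmod_Csum|].
    rewrite Rmult_comm, <- Rsum_scal. apply Rsum_le. intros k Hk.
    rewrite Cmod_mul. pose proof (Cmod_coord_le n x k Hk). pose proof (Cmod_nonneg (A i k)). nra. }
  apply pow2_le_reg; [apply Rmult_le_pos; auto using mbound_nonneg|].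
  rewrite vnorm_sq, Rpow_mult_distr. unfold mbound.
  rewrite pow2_sqrt by (apply Rsum_nonneg; intros; apply pow2_ge_0).
  rewrite Rmult_comm, <- Rsum_scal. apply Rsum_le. intros i _.
  replace (cdot (mapply n A x i) (mapply n A x i)) with (Cmod (mapply n A x i) ^ 2)
    by (rewrite Cmod_sq; unfold cdot; ring).
  pose proof (Hrow i). pose proof (Cmod_nonneg (mapply n A x i)). nra.
Qed.

Lemma opnorm_nonneg (n : nat) (A : mat) (a : R) : is_opnorm n A a -> 0 <= a.
Proof.
  intros [Hub _]. apply Hub. exists vzero.
  rewrite mapply_vzero, vnorm_zero. split; [lra|reflexivity].
Qed.

Lemma vnorm_normalize (n : nat) (x : vec) :
  vnorm n x <> 0 -> vnorm n (vscal (RtoC (/ vnorm n x)) x) = 1.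
Proof.
  intros H. pose proof (vnorm_nonneg n x).
  rewrite vnorm_scal, Cmod_RtoC, Rabs_pos_eq; [field; auto|].
  apply Rlt_le, Rinv_0_lt_compat. lra.
Qed.

Lemma opnorm_bound (n : nat) (A : mat) (a : R) (x : vec) :
  is_opnorm n A a -> vnorm n (mapply n A x) <= a * vnorm n x.
Proof.
  intros Hop. pose proof (opnorm_nonneg _ _ _ Hop) as Ha. pose proof (vnorm_nonneg n x) as Hx.
  destruct (Req_dec (vnorm n x) 0) as [H0|H0].
  - rewrite (mapply_ext n A x vzero) by (intros; rewrite (vnorm_eq0 n x H0) by auto; reflexivity).
    rewrite mapply_vzero, vnorm_zero. nra.
  - assert (Hb : vnorm n (mapply n A (vscal (RtoC (/ vnorm n x)) x)) <= a).
    { apply (proj1 Hop). eexists. split; [|reflexivity]. rewrite vnorm_normalize; auto. lra. }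
    rewrite mapply_vscal, vnorm_scal, Cmod_RtoC, Rabs_pos_eq in Hb
      by (apply Rlt_le, Rinv_0_lt_compat; lra).
    apply (Rmult_le_compat_r (vnorm n x)) in Hb; auto.
    rewrite Rmult_comm, <- Rmult_assoc, Rinv_r, Rmult_1_l in Hb; auto.
Qed.

Lemma opnorm_mscal_ge (n : nat) (A : mat) (t a b : R) : 0 <= t ->
  is_opnorm n A a -> is_opnorm n (mscal (RtoC t) A) b -> t * a <= b.
Proof.
  intros Ht HA Hb. destruct (Req_dec t 0) as [->|Ht0].
  - rewrite Rmult_0_l. apply (opnorm_nonneg n _ _ Hb).
  - enough (a <= b / t) by (apply (Rmult_le_compat_l t) in H; [|lra];
                            replace (t * (b / t)) with b in H by (field; lra); lra).
    apply (proj2 HA). intros r [x [Hx ->]].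
    pose proof (opnorm_bound n _ _ x Hb) as Hx'.
    rewrite mapply_mscal, vnorm_scal, Cmod_RtoC, Rabs_pos_eq in Hx' by lra.
    pose proof (opnorm_nonneg n _ _ Hb).
    apply (Rmult_le_reg_l t); [lra|]. replace (t * (b / t)) with b by (field; lra).
    pose proof (vnorm_nonneg n x). nra.
Qed.

Lemma vadd_zero_r (x : vec) : vadd x vzero = x.
Proof. vext. Qed.

Lemma vsum_app (N : nat) (f : nat -> vec) (i : nat) : vsum N f i = Csum N (fun l => f l i).
Proof. induction N; simpl; auto. unfold vadd. rewrite IHN. reflexivity. Qed.

Lemma Csum_ext (N : nat) (f g : nat -> Cx) :
  (forall l, (l < N)%nat -> f l = g l) -> Csum N f = Csum N g.
Proof.
  induction N; simpl; intros H; auto. rewrite IHN by (intros; apply H; lia). rewrite H by lia. auto.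
Qed.

Lemma vsum_ext (L : nat) (f g : nat -> vec) :
  (forall l, (l < L)%nat -> f l = g l) -> vsum L f = vsum L g.
Proof.
  induction L; simpl; intros H; auto. rewrite IHL by (intros; apply H; lia). rewrite H by lia. auto.
Qed.

Lemma vsum_add (L : nat) (f g : nat -> vec) :
  vsum L (fun l => vadd (f l) (g l)) = vadd (vsum L f) (vsum L g).
Proof. induction L; simpl; [vext|]. rewrite IHL. vext. Qed.

Lemma vsum_sub (L : nat) (f g : nat -> vec) :
  vsum L (fun l => vsub (f l) (g l)) = vsub (vsum L f) (vsum L g).
Proof. induction L; simpl; [vext|]. rewrite IHL. vext. Qed.

Lemma vsum_zero (L : nat) : vsum L (fun _ => vzero) = vzero.
Proof. induction L; simpl; auto. rewrite IHL. vext. Qed.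

Lemma vsum_scal (L : nat) (a : Cx) (f : nat -> vec) :
  vscal a (vsum L f) = vsum L (fun l => vscal a (f l)).
Proof. induction L; simpl; [vext|]. rewrite <- IHL. vext. Qed.

Lemma vsum_split (a b : nat) (f : nat -> vec) :
  vsum (a + b) f = vadd (vsum a f) (vsum b (fun j => f (a + j)%nat)).
Proof.
  induction b.
  - rewrite Nat.add_0_r. simpl. vext.
  - rewrite Nat.add_succ_r. simpl. rewrite IHb. vext.
Qed.

Lemma vsum_shift (L : nat) (f : nat -> vec) :
  vsum (S L) f = vadd (f O) (vsum L (fun l => f (S l))).
Proof.
  change (S L) with (1 + L)%nat. rewrite vsum_split. simpl. f_equal. vext.
Qed.

Lemma Un_cv_const (c : R) : Un_cv (fun _ => c) c.
Proof. intros eps Heps. exists O. intros. unfold Rdist. rewrite Rminus_diag, Rabs_R0. lra. Qed.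

Lemma Un_cv_le_mult (u d : nat -> R) (l C : R) :
  Un_cv d 0 -> (forall j, Rabs (u j - l) <= C * d j) -> Un_cv u l.
Proof.
  intros Hd H eps Heps.
  destruct (Hd (eps / (Rabs C + 1))) as [N HN].
  { apply Rdiv_lt_0_compat; auto. pose proof (Rabs_pos C). lra. }
  exists N. intros j Hj. specialize (HN j Hj). unfold Rdist in *. rewrite Rminus_0_r in HN.
  eapply Rle_lt_trans; [apply H|].
  apply (Rmult_lt_compat_r (Rabs C + 1)) in HN; [|pose proof (Rabs_pos C); lra].
  replace (eps / (Rabs C + 1) * (Rabs C + 1)) with eps in HN
    by (field; pose proof (Rabs_pos C); lra).
  pose proof (Rabs_pos C). pose proof (Rabs_pos (d j)).
  assert (C * d j <= Rabs C * Rabs (d j)) by (rewrite <- Rabs_mult; apply Rle_abs). nra.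
Qed.

Lemma inv_INR_eventually_le (eta : R) : 0 < eta ->
  exists m0, (1 <= m0)%nat /\ forall m, (m0 <= m)%nat -> / INR m <= eta.
Proof.
  intros He. destruct (archimed (/ eta)) as [Ha _].
  assert (Hz : (0 <= up (/ eta))%Z).
  { apply le_IZR. assert (0 < / eta) by (apply Rinv_0_lt_compat; auto). lra. }
  exists (S (Z.to_nat (up (/ eta)))). split; [lia|]. intros m Hm.
  apply le_INR in Hm. rewrite S_INR, INR_IZR_INZ, Z2Nat.id in Hm by auto.
  assert (0 < / eta) by (apply Rinv_0_lt_compat; auto).
  rewrite <- (Rinv_inv eta). apply Rinv_le_contravar; lra.
Qed.

Lemma div_INR_eventually_le (C eta : R) : 0 < eta ->
  exists m0, forall m, (m0 <= m)%nat -> C / INR m <= eta.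
Proof.
  intros He. pose proof (Rabs_pos C).
  destruct (inv_INR_eventually_le (eta / (Rabs C + 1))) as [m0 [Hm0 Hb]].
  { apply Rdiv_lt_0_compat; lra. }
  exists m0. intros m Hm. specialize (Hb m Hm).
  assert (0 < / INR m) by (apply Rinv_0_lt_compat, lt_0_INR; lia).
  apply Rle_trans with ((Rabs C + 1) * / INR m); [unfold Rdiv; pose proof (Rle_abs C); nra|].
  apply (Rmult_le_compat_l (Rabs C + 1)) in Hb; [|lra].
  replace ((Rabs C + 1) * (eta / (Rabs C + 1))) with eta in Hb by (field; lra). exact Hb.
Qed.

Lemma Un_cv_inv_succ : Un_cv (fun j => / (INR j + 1)) 0.
Proof.
  intros eps Heps. destruct (inv_INR_eventually_le (eps / 2)) as [m0 [_ Hm0]]; [lra|].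
  exists m0. intros j Hj. unfold Rdist. rewrite Rminus_0_r, <- S_INR.
  rewrite Rabs_pos_eq by (apply Rlt_le, Rinv_0_lt_compat, lt_0_INR; lia).
  specialize (Hm0 (S j) ltac:(lia)). lra.
Qed.

Definition strict_incr (phi : nat -> nat) : Prop := forall j, (phi j < phi (S j))%nat.

Lemma strict_incr_ge (phi : nat -> nat) : strict_incr phi -> forall j, (j <= phi j)%nat.
Proof. intros H j. induction j; [lia|]. specialize (H j). lia. Qed.

Lemma strict_incr_comp (phi psi : nat -> nat) :
  strict_incr phi -> strict_incr psi -> strict_incr (fun j => phi (psi j)).
Proof.
  intros H1 H2 j. specialize (H2 j).
  assert (Hmono : forall a b, (a < b)%nat -> (phi a < phi b)%nat).
  { intros a b Hab. induction b; [lia|].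
    destruct (Nat.eq_dec a b) as [->|]; [apply H1|].
    specialize (H1 b). assert (phi a < phi b)%nat by (apply IHb; lia). lia. }
  auto.
Qed.

Lemma Un_cv_subseq (u : nat -> R) (l : R) (phi : nat -> nat) :
  strict_incr phi -> Un_cv u l -> Un_cv (fun j => u (phi j)) l.
Proof.
  intros Hp Hu eps Heps. destruct (Hu eps Heps) as [N HN]. exists N. intros j Hj.
  apply HN. pose proof (strict_incr_ge phi Hp j). lia.
Qed.

Lemma bounded_seq_cv_subseq (a : nat -> R) (B : R) :
  (forall j, Rabs (a j) <= B) -> exists phi l, strict_incr phi /\ Un_cv (fun j => a (phi j)) l.
Proof.
  intros Hb.
  destruct (Bolzano_Weierstrass a (fun c => -B <= c <= B) (compact_P3 (-B) B)) as [l Hl].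
  { intros j. specialize (Hb j). pose proof (Rle_abs (a j)). pose proof (Rle_abs (- a j)).
    rewrite Rabs_Ropp in *. lra. }
  assert (Hex : forall Nj : nat * nat, exists p,
             (fst Nj <= p)%nat /\ Rabs (a p - l) < / (INR (snd Nj) + 1)).
  { intros [N j].
    assert (Hpos : 0 < / (INR j + 1)) by (apply Rinv_0_lt_compat; pose proof (pos_INR j); lra).
    destruct (Hl (disc l (mkposreal _ Hpos)) N) as [p [Hp1 Hp2]].
    - exists (mkposreal _ Hpos). intros y Hy. exact Hy.
    - exists p. split; auto. }
  destruct (choice _ Hex) as [sel Hsel].
  set (phi := fix phi (j : nat) : nat :=
         match j with O => sel (O, O) | S j' => sel (S (phi j'), S j') end).
  exists phi, l. split.
  - intros j. simpl. destruct (Hsel (S (phi j), S j)). simpl in *. lia.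
  - apply (Un_cv_le_mult _ _ l 1 Un_cv_inv_succ). intros j.
    assert (Rabs (a (phi j) - l) < / (INR j + 1)) by (destruct j; simpl; apply Hsel). lra.
Qed.

Lemma bounded_vec_cv_coords (n : nat) (x : nat -> vec) (B : R) :
  (forall j i, (i < n)%nat -> Rabs (fst (x j i)) <= B /\ Rabs (snd (x j i)) <= B) ->
  forall k, (k <= n)%nat -> exists phi (L : vec), strict_incr phi /\
    forall i, (i < k)%nat -> Un_cv (fun j => fst (x (phi j) i)) (fst (L i)) /\
                             Un_cv (fun j => snd (x (phi j) i)) (snd (L i)).
Proof.
  intros Hb k. induction k; intros Hk.
  - exists (fun j => j), (fun _ => C0). split; [intros j; lia|]. intros; lia.
  - destruct IHk as [phi [L [Hphi HL]]]; [lia|].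
    destruct (bounded_seq_cv_subseq (fun j => fst (x (phi j) k)) B) as [psi1 [l1 [Hp1 Hc1]]].
    { intros j. apply Hb. lia. }
    destruct (bounded_seq_cv_subseq (fun j => snd (x (phi (psi1 j)) k)) B)
      as [psi2 [l2 [Hp2 Hc2]]].
    { intros j. apply Hb. lia. }
    exists (fun j => phi (psi1 (psi2 j))), (fun i => if Nat.eqb i k then (l1, l2) else L i).
    split; [apply strict_incr_comp; [|apply strict_incr_comp]; auto|].
    intros i Hi. destruct (Nat.eqb_spec i k) as [->|Hne].
    + split; [|exact Hc2]. apply (Un_cv_subseq (fun j => fst (x (phi (psi1 j)) k))); auto.
    + destruct (HL i ltac:(lia)) as [H1 H2].
      split; [apply (Un_cv_subseq (fun j => fst (x (phi j) i)))
             |apply (Un_cv_subseq (fun j => snd (x (phi j) i)))];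
        auto; apply strict_incr_comp; auto.
Qed.

Lemma Un_cv_Rsum (N : nat) (u : nat -> nat -> R) (l : nat -> R) :
  (forall i, (i < N)%nat -> Un_cv (fun j => u j i) (l i)) ->
  Un_cv (fun j => Rsum N (u j)) (Rsum N l).
Proof.
  induction N; intros H; simpl.
  - exact (Un_cv_const 0).
  - apply CV_plus; auto.
Qed.

Lemma Un_cv_sqrt_0 (u : nat -> R) :
  (forall j, 0 <= u j) -> Un_cv u 0 -> Un_cv (fun j => sqrt (u j)) 0.
Proof.
  intros Hp Hu eps Heps. destruct (Hu (eps * eps)) as [N HN]; [nra|]. exists N. intros j Hj.
  specialize (HN j Hj). unfold Rdist in *. rewrite Rminus_0_r in *.
  rewrite Rabs_pos_eq in HN by auto. rewrite Rabs_pos_eq by apply sqrt_pos.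
  rewrite <- (sqrt_square eps) by lra. apply sqrt_lt_1; auto. nra.
Qed.

Lemma Un_cv_sub_const (u : nat -> R) (l : R) : Un_cv u l -> Un_cv (fun j => u j - l) 0.
Proof.
  intros H. replace 0 with (l - l) by ring. apply CV_minus; [exact H|apply Un_cv_const].
Qed.

Lemma vnorm_cv_of_coords (n : nat) (y : nat -> vec) (L : vec) :
  (forall i, (i < n)%nat -> Un_cv (fun j => fst (y j i)) (fst (L i)) /\
                           Un_cv (fun j => snd (y j i)) (snd (L i))) ->
  Un_cv (fun j => vnorm n (vsub (y j) L)) 0.
Proof.
  intros H.
  apply (Un_cv_ext (fun j => sqrt (vdot n (vsub (y j) L) (vsub (y j) L))));
    [intros; symmetry; apply vnorm_sqrt|].
  apply Un_cv_sqrt_0; [intros; apply vdot_self_nonneg|].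
  replace 0 with (Rsum n (fun _ => 0)) by (rewrite Rsum_const; ring).
  apply Un_cv_Rsum. intros i Hi. destruct (H i Hi) as [H1 H2].
  apply Un_cv_sub_const in H1, H2.
  unfold cdot. cxsimpl. replace 0 with (0 * 0 + 0 * 0) by ring.
  apply CV_plus; apply CV_mult; auto.
Qed.

Lemma bounded_vec_cv_subseq (n : nat) (x : nat -> vec) (B : R) :
  (forall j, vnorm n (x j) <= B) ->
  exists phi L, strict_incr phi /\ Un_cv (fun j => vnorm n (vsub (x (phi j)) L)) 0.
Proof.
  intros Hb.
  destruct (bounded_vec_cv_coords n x B) with (k := n) as [phi [L [Hphi HL]]]; [|lia|].
  - intros j i Hi. pose proof (Cmod_coord_le n (x j) i Hi). pose proof (Hb j).
    pose proof (Rabs_fst_le_Cmod (x j i)). pose proof (Rabs_snd_le_Cmod (x j i)). lra.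
  - exists phi, L. split; auto. apply vnorm_cv_of_coords. auto.
Qed.

(** * The numerical range and the logarithmic norm *)

Section LogNorm.
Variables (n : nat) (A : mat).

Definition qform (x : vec) : R := vdot n (mapply n A x) x.
Let herm := mscal (RtoC (/ 2)) (madd A (madj A)).

Lemma qform_le (x : vec) : qform x <= mbound n A * vnorm n x ^ 2.
Proof.
  pose proof (vdot_Cauchy_Schwarz n (mapply n A x) x).
  pose proof (Rle_abs (qform x)). pose proof (vnorm_mapply_le n A x).
  pose proof (vnorm_nonneg n x). unfold qform in *. nra.
Qed.

Lemma qform_scal (r : R) (x : vec) : qform (vscal (RtoC r) x) = r ^ 2 * qform x.
Proof. unfold qform. rewrite mapply_vscal, vdot_scall, vdot_scalr. ring. Qed.

Lemma qform_lipschitz (x y : vec) :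
  Rabs (qform x - qform y) <= mbound n A * vnorm n (vsub x y) * (vnorm n x + vnorm n y).
Proof.
  unfold qform.
  replace (vdot n (mapply n A x) x - vdot n (mapply n A y) y)
    with (vdot n (mapply n A (vsub x y)) x + vdot n (mapply n A y) (vsub x y))
    by (rewrite mapply_vsub, vdot_subl, vdot_subr; ring).
  eapply Rle_trans; [apply Rabs_triang|].
  pose proof (vdot_Cauchy_Schwarz n (mapply n A (vsub x y)) x).
  pose proof (vdot_Cauchy_Schwarz n (mapply n A y) (vsub x y)).
  pose proof (vnorm_mapply_le n A (vsub x y)). pose proof (vnorm_mapply_le n A y).
  pose proof (vnorm_nonneg n x). pose proof (vnorm_nonneg n y).
  pose proof (vnorm_nonneg n (vsub x y)). pose proof (mbound_nonneg n A). nra.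
Qed.

Lemma vdot_herm (x y : vec) :
  vdot n (mapply n herm x) y = (vdot n (mapply n A x) y + vdot n (mapply n A y) x) / 2.
Proof.
  unfold herm. rewrite mapply_mscal, mapply_madd, vdot_scall, vdot_addl.
  rewrite (vdot_comm n (mapply n (madj A) x) y), <- vdot_madj. field.
Qed.

Lemma qform_le_of_unit (M : R) :
  (forall x, vnorm n x = 1 -> qform x <= M) -> forall z, qform z <= M * vdot n z z.
Proof.
  intros Hunit z. destruct (Req_dec (vnorm n z) 0) as [Hz|Hz].
  - pose proof (qform_le z) as Hq. rewrite <- vnorm_sq, Hz in *. lra.
  - pose proof (vnorm_nonneg n z).
    pose proof (Hunit _ (vnorm_normalize n z Hz)) as Hq. rewrite qform_scal in Hq.
    rewrite <- vnorm_sq.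
    replace (qform z) with (vnorm n z ^ 2 * ((/ vnorm n z) ^ 2 * qform z)) by (field; auto).
    rewrite (Rmult_comm M). apply Rmult_le_compat_l; [apply pow2_ge_0|exact Hq].
Qed.

Lemma qform_max_attained (y0 : vec) : vnorm n y0 = 1 ->
  exists M L, vnorm n L = 1 /\ qform L = M /\ forall z, qform z <= M * vdot n z z.
Proof.
  intros Hy0.
  set (S := fun r => exists x, vnorm n x = 1 /\ r = qform x).
  destruct (completeness S) as [M [HMub HMlub]].
  { exists (mbound n A). intros r [x [Hx ->]]. pose proof (qform_le x). rewrite Hx in *. lra. }
  { exists (qform y0), y0. auto. }
  assert (Hunit : forall x, vnorm n x = 1 -> qform x <= M) by (intros x Hx; apply HMub; exists x; auto).
  assert (Hnear : forall j : nat, exists x, vnorm n x = 1 /\ M - / (INR j + 1) < qform x).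
  { intros j. apply NNPP. intros Hno.
    assert (0 < / (INR j + 1)) by (apply Rinv_0_lt_compat; pose proof (pos_INR j); lra).
    enough (M <= M - / (INR j + 1)) by lra.
    apply HMlub. intros r [x [Hx ->]]. apply Rnot_lt_le. intros Hlt. apply Hno. exists x. auto. }
  destruct (choice _ Hnear) as [xs Hxs].
  destruct (bounded_vec_cv_subseq n xs 1) as [phi [L [Hphi HL]]].
  { intros j. rewrite (proj1 (Hxs j)). lra. }
  assert (HL1 : vnorm n L = 1).
  { apply (UL_sequence (fun j => vnorm n (xs (phi j)))).
    - apply (Un_cv_le_mult _ _ _ 1 HL). intros j. rewrite Rmult_1_l. apply vnorm_reverse_triangle.
    - apply (Un_cv_ext (fun _ => 1)); [intros j; symmetry; apply Hxs|]. apply Un_cv_const. }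
  exists M, L. split; [auto|]. split; [|apply qform_le_of_unit; auto].
  apply (UL_sequence (fun j => qform (xs (phi j)))).
  - apply (Un_cv_le_mult _ _ _ (2 * mbound n A) HL). intros j.
    eapply Rle_trans; [apply qform_lipschitz|]. rewrite (proj1 (Hxs (phi j))), HL1. lra.
  - apply (Un_cv_le_mult _ _ _ 1 Un_cv_inv_succ). intros j.
    destruct (Hxs (phi j)) as [Hn Hlt]. pose proof (Hunit _ Hn).
    pose proof (le_INR _ _ (strict_incr_ge phi Hphi j)).
    assert (/ (INR (phi j) + 1) <= / (INR j + 1))
      by (apply Rinv_le_contravar; pose proof (pos_INR j); lra).
    rewrite Rabs_left1; lra.
Qed.

Lemma qform_max_eigenvalue (M : R) (L : vec) :
  vnorm n L = 1 -> qform L = M -> (forall z, qform z <= M * vdot n z z) ->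
  is_eigenvalue n herm (RtoC M).
Proof.
  intros HL1 HLM Hmax.
  assert (HLL : vdot n L L = 1) by (rewrite <- vnorm_sq, HL1; ring).
  (* First-order condition: [s = 0] maximizes [qform (L + s y) - M |L + s y|^2]. *)
  assert (Hfo : forall y, vdot n (mapply n herm L) y = M * vdot n L y).
  { intros y. rewrite vdot_herm.
    set (b := M * vdot n L y - (vdot n (mapply n A L) y + vdot n (mapply n A y) L) / 2).
    enough (b ^ 2 <= 0 * (M * vdot n y y - qform y)) by (assert (b = 0) by nra; unfold b in *; lra).
    apply quadratic_nonneg_discriminant; [pose proof (Hmax y); lra|]. intros s.
    pose proof (Hmax (vadd L (vscal (RtoC s) y))) as Hz. unfold qform in *.
    rewrite mapply_vadd, mapply_vscal, !vdot_addl, !vdot_addr, !vdot_scall, !vdot_scalr,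
      (vdot_comm n y L), HLM, HLL in Hz.
    unfold b. lra. }
  set (w := vsub (mapply n herm L) (vscal (RtoC M) L)).
  assert (Hw : vnorm n w = 0).
  { rewrite vnorm_sqrt. unfold w at 1. rewrite vdot_subl, vdot_scall, Hfo, Rminus_diag. apply sqrt_0. }
  exists L. split.
  - apply NNPP. intros Hno.
    rewrite (vnorm_ext n L vzero), vnorm_zero in HL1; [lra|].
    intros i Hi. apply NNPP. intros Hne. apply Hno. exists i. auto.
  - intros i Hi. pose proof (vnorm_eq0 n w Hw i Hi) as Hwi. unfold w in Hwi. cxsimpl.
    destruct (mapply n herm L i) as [a1 a2], (L i) as [l1 l2]. simpl in *.
    injection Hwi. intros. f_equal; lra.
Qed.

Lemma lognorm_bound (mu : R) : is_lognorm n A mu -> forall x, qform x <= mu * vdot n x x.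
Proof.
  intros [[x0 [[i0 [Hi0 Hx0]] _]] Hmu] x.
  assert (Hx0n : vnorm n x0 <> 0) by (intros Hc; apply Hx0, (vnorm_eq0 n x0 Hc i0 Hi0)).
  destruct (qform_max_attained _ (vnorm_normalize n x0 Hx0n)) as [M [L [HL1 [HLM Hle]]]].
  pose proof (Hmu _ (qform_max_eigenvalue M L HL1 HLM Hle)) as HMmu. simpl in HMmu.
  pose proof (Hle x). pose proof (vdot_self_nonneg n x). nra.
Qed.

End LogNorm.

Fixpoint binom (m j : nat) : R :=
  match m, j with
  | _, O => 1
  | O, S _ => 0
  | S m', S j' => binom m' j' + binom m' (S j')
  end.

Fixpoint falling (x : R) (j : nat) : R :=
  match j with O => 1 | S j' => falling x j' * (x - INR j') end.

Lemma binom_0_r (m : nat) : binom m 0 = 1.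
Proof. destruct m; reflexivity. Qed.

Lemma binom_nonneg (m j : nat) : 0 <= binom m j.
Proof.
  revert j. induction m; intros j; destruct j; simpl; try lra.
  pose proof (IHm j). pose proof (IHm (S j)). lra.
Qed.

Lemma falling_gt (m j : nat) : (m < j)%nat -> falling (INR m) j = 0.
Proof.
  induction j; intros Hj; [lia|]. simpl.
  destruct (Nat.eq_dec m j) as [->|Hne]; [rewrite Rminus_diag; ring|].
  rewrite IHj by lia. ring.
Qed.

Lemma falling_succ (x : R) (j : nat) : falling (x + 1) (S j) = (x + 1) * falling x j.
Proof.
  induction j; [simpl; ring|].
  change (falling (x + 1) (S (S j))) with (falling (x + 1) (S j) * (x + 1 - INR (S j))).
  rewrite IHj. simpl falling. rewrite S_INR. ring.
Qed.

Lemma binom_fact (m j : nat) : binom m j * INR (fact j) = falling (INR m) j.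
Proof.
  revert j. induction m; intros j.
  - destruct j; [simpl; lra|]. rewrite (falling_gt 0 (S j)) by lia. simpl. ring.
  - destruct j; [simpl; lra|].
    rewrite S_INR, falling_succ. simpl binom.
    replace ((binom m j + binom m (S j)) * INR (fact (S j)))
      with (INR (S j) * (binom m j * INR (fact j)) + binom m (S j) * INR (fact (S j)))
      by (rewrite fact_simpl, mult_INR; ring).
    rewrite !IHm. simpl falling. rewrite S_INR. ring.
Qed.

Lemma falling_nonneg (m j : nat) : 0 <= falling (INR m) j.
Proof.
  induction j; simpl; [lra|].
  destruct (le_lt_dec j m) as [Hjm|Hjm]; [|rewrite falling_gt by lia; lra].
  apply le_INR in Hjm. apply Rmult_le_pos; lra.
Qed.

Lemma falling_le_pow (m j : nat) : falling (INR m) j <= INR m ^ j.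
Proof.
  induction j; simpl; [lra|].
  pose proof (pos_INR m). pose proof (pow_le (INR m) j H).
  destruct (le_lt_dec j m) as [Hjm|Hjm]; [|rewrite falling_gt by lia; nra].
  pose proof (falling_nonneg m j). pose proof (pos_INR j). apply le_INR in Hjm.
  rewrite Rmult_comm. apply Rmult_le_compat; lra.
Qed.

Lemma falling_ge (m j : nat) : (1 <= m)%nat ->
  (2 * INR m - INR j ^ 2) * INR m ^ j <= 2 * INR m * falling (INR m) j.
Proof.
  intros Hm. pose proof (pos_INR m) as Hm0. induction j; [simpl; lra|].
  pose proof (pow_le (INR m) j Hm0) as Hp. simpl falling. rewrite S_INR.
  destruct (le_lt_dec j m) as [Hjm|Hjm].
  - apply le_INR in Hjm. pose proof (pos_INR j) as Hj0.
    assert (0 <= INR m - INR j) by lra.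
    assert ((2 * INR m - INR j ^ 2) * INR m ^ j * (INR m - INR j)
            <= 2 * INR m * falling (INR m) j * (INR m - INR j))
      by (apply Rmult_le_compat_r; auto).
    assert ((2 * INR m - (INR j + 1) ^ 2) * INR m ^ S j
            <= (2 * INR m - INR j ^ 2) * INR m ^ j * (INR m - INR j)).
    { simpl. assert (0 <= (INR j ^ 3 + INR m) * INR m ^ j)
        by (apply Rmult_le_pos; [pose proof (pow_le (INR j) 3 Hj0)|]; lra).
      nra. }
    nra.
  - rewrite falling_gt by lia. apply lt_INR in Hjm. apply le_INR in Hm. simpl in Hm.
    assert (2 * INR m - (INR j + 1) ^ 2 <= 0) by nra.
    simpl. assert (0 <= INR m * INR m ^ j) by (apply Rmult_le_pos; auto). nra.
Qed.

(* Compares the coefficients of [(1 + x/m)^m] with those of [exp x]. *)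
Lemma binom_coef_err (m j : nat) : (1 <= m)%nat ->
  0 <= / INR (fact j) - binom m j / INR m ^ j <= INR j ^ 2 / (2 * INR m) * / INR (fact j).
Proof.
  intros Hm.
  assert (Hmpos : 0 < INR m) by (apply lt_0_INR; lia).
  assert (Hmj : 0 < INR m ^ j) by (apply pow_lt; auto).
  assert (Hf : 0 < INR (fact j)) by (apply lt_0_INR, lt_O_fact).
  pose proof (falling_le_pow m j). pose proof (falling_ge m j Hm).
  replace (/ INR (fact j) - binom m j / INR m ^ j)
    with ((INR m ^ j - falling (INR m) j) / (INR m ^ j * INR (fact j)))
    by (rewrite <- binom_fact; field; lra).
  replace (INR j ^ 2 / (2 * INR m) * / INR (fact j))
    with ((INR j ^ 2 * INR m ^ j / (2 * INR m)) / (INR m ^ j * INR (fact j))) by (field; lra).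
  assert (0 < INR m ^ j * INR (fact j)) by (apply Rmult_lt_0_compat; auto).
  split; unfold Rdiv at 1; [apply Rmult_le_pos; [lra|apply Rlt_le, Rinv_0_lt_compat; auto]|].
  unfold Rdiv at 2. apply Rmult_le_compat_r; [apply Rlt_le, Rinv_0_lt_compat; auto|].
  apply (Rmult_le_reg_l (2 * INR m)); [lra|].
  replace (2 * INR m * (INR j ^ 2 * INR m ^ j * / (2 * INR m))) with (INR j ^ 2 * INR m ^ j)
    by (field; lra).
  lra.
Qed.

Lemma binom_mul_pow_le (m l : nat) (t : R) : (1 <= m)%nat -> 0 <= t ->
  binom m l * (t / INR m) ^ l <= t ^ l / INR (fact l).
Proof.
  intros Hm Ht.
  assert (Hmpos : 0 < INR m) by (apply lt_0_INR; lia).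
  assert (Hf : 0 < INR (fact l)) by (apply lt_0_INR, lt_O_fact).
  assert (0 <= t ^ l) by (apply pow_le; auto).
  assert (0 < INR m ^ l) by (apply pow_lt; auto).
  pose proof (falling_le_pow m l).
  apply (Rmult_le_reg_r (INR (fact l) * INR m ^ l)); [nra|].
  replace (binom m l * (t / INR m) ^ l * (INR (fact l) * INR m ^ l))
    with (binom m l * INR (fact l) * t ^ l) by (unfold Rdiv; rewrite Rpow_mult_distr, pow_inv; field; lra).
  replace (t ^ l / INR (fact l) * (INR (fact l) * INR m ^ l)) with (INR m ^ l * t ^ l)
    by (field; lra).
  rewrite binom_fact. apply Rmult_le_compat_r; auto.
Qed.

Lemma pow2_le_4_pow (j : nat) : INR j ^ 2 <= 4 ^ j.
Proof.
  induction j; [simpl; lra|].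
  rewrite S_INR. simpl pow in *. destruct j; [simpl; lra|].
  rewrite S_INR in *. pose proof (pos_INR j). nra.
Qed.

(** * Expanding a perturbed iteration *)

Section PerturbedIteration.
Variables (n : nat) (G F : vec -> vec) (u0 : vec).
Hypothesis G_add : forall x y, G (vadd x y) = vadd (G x) (G y).
Hypothesis G_scal : forall a x, G (vscal a x) = vscal a (G x).
Hypothesis F_add : forall x y, F (vadd x y) = vadd (F x) (F y).
Hypothesis F_scal : forall a x, F (vscal a x) = vscal a (F x).

Definition pstep (e : Cx) (x : vec) : vec := vadd (G x) (vscal e (F x)).

(* [pcoef j l] is the coefficient of [e^l] in [(G + e F)^j u0]. *)
Fixpoint pcoef (j l : nat) : vec :=
  match j, l with
  | O, O => u0
  | O, S _ => vzero
  | S j', O => G (pcoef j' O)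
  | S j', S l' => vadd (G (pcoef j' (S l'))) (F (pcoef j' l'))
  end.

Lemma linear_zero (T : vec -> vec) : (forall a x, T (vscal a x) = vscal a (T x)) -> T vzero = vzero.
Proof.
  intros HT. replace vzero with (vscal (RtoC 0) vzero) by vext. rewrite HT. vext.
Qed.

Lemma pcoef_gt (j l : nat) : (j < l)%nat -> pcoef j l = vzero.
Proof.
  revert l. induction j; intros l Hl; destruct l; try lia; simpl; auto.
  rewrite !IHj by lia. rewrite !linear_zero by auto. vext.
Qed.

Lemma pcoef_succ (j l : nat) :
  pcoef (S j) l = vadd (G (pcoef j l)) (match l with O => vzero | S l' => F (pcoef j l') end).
Proof. destruct l; simpl; [vext|reflexivity]. Qed.

Lemma linear_vsum (T : vec -> vec) (L : nat) (f : nat -> vec) :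
  (forall x y, T (vadd x y) = vadd (T x) (T y)) -> (forall a x, T (vscal a x) = vscal a (T x)) ->
  T (vsum L f) = vsum L (fun l => T (f l)).
Proof.
  intros Hadd Hscal. induction L; simpl; [apply linear_zero; auto|].
  rewrite Hadd, IHL. reflexivity.
Qed.

Lemma vsum_shift_pad (e : Cx) (L : nat) (h : nat -> vec) :
  vsum (S L) (fun l => vscal (Cpow e l) (match l with O => vzero | S l' => h l' end))
  = vsum L (fun l => vscal (Cpow e (S l)) (h l)).
Proof. rewrite vsum_shift. replace (vscal (Cpow e 0) vzero) with vzero by vext. vext. Qed.

Lemma pstep_iter_expand (e : Cx) (j L : nat) : (j < L)%nat ->
  Nat.iter j (pstep e) u0 = vsum L (fun l => vscal (Cpow e l) (pcoef j l)).
Proof.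
  revert L. induction j; intros L HL.
  - destruct L; [lia|]. rewrite vsum_shift, vsum_ext with (g := fun _ => vzero)
      by (intros; simpl; vext).
    rewrite vsum_zero. simpl. vext.
  - destruct L as [|L]; [lia|]. simpl Nat.iter. rewrite (IHj L) by lia.
    rewrite (vsum_ext (S L) _ (fun l => vadd (vscal (Cpow e l) (G (pcoef j l)))
        (vscal (Cpow e l) (match l with O => vzero | S l' => F (pcoef j l') end))))
      by (intros; rewrite pcoef_succ; vext).
    rewrite vsum_add, vsum_shift_pad. cbn [vsum].
    rewrite (pcoef_gt j L), linear_zero by (auto; lia).
    unfold pstep. rewrite (linear_vsum G), (linear_vsum F), vsum_scal by auto.
    replace (vscal (Cpow e L) vzero) with vzero by vext. rewrite vadd_zero_r.
    f_equal; apply vsum_ext; intros; [apply G_scal|]. rewrite F_scal. simpl Cpow. vext.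
Qed.

Lemma pcoef_bound (q p : R) (j l : nat) :
  0 < q -> 0 <= p ->
  (forall x, vnorm n (G x) <= q * vnorm n x) -> (forall x, vnorm n (F x) <= p * vnorm n x) ->
  vnorm n (pcoef j l) <= binom j l * q ^ j * (p / q) ^ l * vnorm n u0.
Proof.
  intros Hq Hp HG HF. pose proof (vnorm_nonneg n u0).
  set (r := p / q). assert (Hr : p = q * r) by (unfold r; field; lra).
  assert (0 <= r) by (unfold r; apply Rmult_le_pos; [|apply Rlt_le, Rinv_0_lt_compat]; lra).
  clearbody r. subst p.
  revert l. induction j; intros l.
  - destruct l; simpl; [lra|]. rewrite vnorm_zero. lra.
  - destruct l; simpl pcoef.
    + eapply Rle_trans; [apply HG|]. specialize (IHj O). rewrite binom_0_r in *.
      simpl pow in *. apply (Rmult_le_compat_l q) in IHj; lra.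
    + eapply Rle_trans; [apply vnorm_triangle|].
      pose proof (HG (pcoef j (S l))). pose proof (HF (pcoef j l)).
      pose proof (IHj (S l)). pose proof (IHj l).
      assert (q * vnorm n (pcoef j (S l)) <= q * (binom j (S l) * q ^ j * r ^ S l * vnorm n u0))
        by (apply Rmult_le_compat_l; lra).
      assert (q * r * vnorm n (pcoef j l) <= q * r * (binom j l * q ^ j * r ^ l * vnorm n u0))
        by (apply Rmult_le_compat_l; nra).
      simpl binom. simpl pow in *. nra.
Qed.

End PerturbedIteration.

Lemma pcoef_id (F : vec -> vec) (u0 : vec) (j l : nat) :
  (forall x y, F (vadd x y) = vadd (F x) (F y)) -> (forall a x, F (vscal a x) = vscal a (F x)) ->
  pcoef (fun x => x) F u0 j l = vscal (RtoC (binom j l)) (Nat.iter l F u0).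
Proof.
  intros F_add F_scal. revert l. induction j; intros l.
  - destruct l; simpl; vext.
  - destruct l; simpl pcoef; rewrite ?IHj; [rewrite !binom_0_r; reflexivity|].
    rewrite F_scal. simpl binom. simpl Nat.iter. vext.
Qed.

(** * Euler approximations of the exponential *)

Definition euler_step (n : nat) (M : mat) (h : R) (x : vec) : vec :=
  vadd x (vscal (RtoC h) (mapply n M x)).

Lemma euler_iter_binom (n : nat) (M : mat) (c : R) (u0 : vec) (j L : nat) : (j < L)%nat ->
  Nat.iter j (euler_step n M c) u0
  = vsum L (fun p => vscal (RtoC (binom j p * c ^ p)) (Nat.iter p (mapply n M) u0)).
Proof.
  intros HjL.
  change (euler_step n M c) with (pstep (fun x => x) (mapply n M) (RtoC c)).
  rewrite (pstep_iter_expand (fun x => x) (mapply n M) u0 (fun _ _ => eq_refl) (fun _ _ => eq_refl)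
    (mapply_vadd n M) (mapply_vscal n M) _ _ L HjL).
  apply vsum_ext. intros p _.
  rewrite (pcoef_id _ _ _ _ (mapply_vadd n M) (mapply_vscal n M)), Cpow_RtoC. vext.
Qed.

Lemma iter_mapply_bound (n : nat) (M : mat) (u0 : vec) (p : nat) :
  vnorm n (Nat.iter p (mapply n M) u0) <= mbound n M ^ p * vnorm n u0.
Proof.
  induction p; simpl; [lra|].
  eapply Rle_trans; [apply vnorm_mapply_le|]. rewrite Rmult_assoc.
  apply Rmult_le_compat_l; auto using mbound_nonneg.
Qed.

Lemma Rsum_exp_le (N : nat) (x : R) : 0 <= x ->
  Rsum N (fun j => x ^ j / INR (fact j)) <= exp x.
Proof.
  intros Hx. destruct N as [|N]; [simpl; pose proof (exp_pos x); lra|].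
  replace (Rsum (S N) _) with (sum_f_R0 (fun j => x ^ j / INR (fact j)) N)
    by (induction N; simpl in *; [ring|rewrite IHN; reflexivity]).
  apply ElemFct.exp_ge_taylor; auto.
Qed.

Lemma euler_exp_term_le (n : nat) (M : mat) (u0 : vec) (m j : nat) : (1 <= m)%nat ->
  vnorm n (vscal (RtoC (/ INR (fact j) - binom m j * (/ INR m) ^ j)) (Nat.iter j (mapply n M) u0))
  <= / (2 * INR m) * ((4 * mbound n M) ^ j / INR (fact j)) * vnorm n u0.
Proof.
  intros Hm.
  assert (Hmpos : 0 < INR m) by (apply lt_0_INR; lia).
  assert (Hf : 0 < INR (fact j)) by (apply lt_0_INR, lt_O_fact).
  set (K := mbound n M). pose proof (mbound_nonneg n M). fold K in H.
  pose proof (vnorm_nonneg n u0). pose proof (pow2_le_4_pow j).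
  assert (HKj : 0 <= K ^ j) by (apply pow_le; auto).
  destruct (binom_coef_err m j Hm) as [Hc1 Hc2].
  replace (binom m j * (/ INR m) ^ j) with (binom m j / INR m ^ j)
    by (rewrite pow_inv; field; apply pow_nonzero; lra).
  rewrite vnorm_scal, Cmod_RtoC, Rabs_pos_eq by auto.
  eapply Rle_trans; [apply Rmult_le_compat_l; [auto|apply iter_mapply_bound]|].
  eapply Rle_trans; [apply Rmult_le_compat_r; [apply Rmult_le_pos; auto|exact Hc2]|].
  fold K. rewrite Rpow_mult_distr.
  replace (INR j ^ 2 / (2 * INR m) * / INR (fact j) * (K ^ j * vnorm n u0))
    with (/ (2 * INR m) * / INR (fact j) * vnorm n u0 * (INR j ^ 2 * K ^ j)) by (field; lra).
  replace (/ (2 * INR m) * (4 ^ j * K ^ j / INR (fact j)) * vnorm n u0)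
    with (/ (2 * INR m) * / INR (fact j) * vnorm n u0 * (4 ^ j * K ^ j)) by (field; lra).
  apply Rmult_le_compat_l; [|apply Rmult_le_compat_r; auto].
  apply Rmult_le_pos; auto. apply Rmult_le_pos; apply Rlt_le, Rinv_0_lt_compat; lra.
Qed.

Lemma euler_exp_err (n : nat) (M : mat) (u0 : vec) (m N : nat) :
  (1 <= m)%nat -> (m <= N)%nat ->
  vnorm n (vsub (vsum (S N) (fun j => vscal (RtoC (/ INR (fact j))) (mapply n (mpow n M j) u0)))
                (Nat.iter m (euler_step n M (/ INR m)) u0))
  <= exp (4 * mbound n M) / (2 * INR m) * vnorm n u0.
Proof.
  intros Hm HN.
  assert (Hmpos : 0 < INR m) by (apply lt_0_INR; lia).
  rewrite (euler_iter_binom n M (/ INR m) u0 m (S N)) by lia.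
  rewrite (vnorm_ext n _ (vsum (S N) (fun j =>
    vscal (RtoC (/ INR (fact j) - binom m j * (/ INR m) ^ j)) (Nat.iter j (mapply n M) u0)))).
  2:{ intros i Hi. rewrite <- vsum_sub, !vsum_app. apply Csum_ext. intros.
      unfold vsub, vscal. rewrite mapply_mpow by auto. apply Cx_ext; cxsimpl; ring. }
  eapply Rle_trans; [apply vnorm_vsum|].
  eapply Rle_trans; [apply Rsum_le; intros j _; apply euler_exp_term_le; auto|].
  rewrite (Rsum_ext _ _ (fun j => / (2 * INR m) * vnorm n u0 * ((4 * mbound n M) ^ j / INR (fact j))))
    by (intros; ring).
  rewrite Rsum_scal.
  replace (exp (4 * mbound n M) / (2 * INR m) * vnorm n u0)
    with (/ (2 * INR m) * vnorm n u0 * exp (4 * mbound n M)) by (field; lra).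
  apply Rmult_le_compat_l.
  - apply Rmult_le_pos; [apply Rlt_le, Rinv_0_lt_compat; lra|apply vnorm_nonneg].
  - apply Rsum_exp_le. pose proof (mbound_nonneg n M). lra.
Qed.

Lemma mexp_euler_err (n : nat) (M : mat) (v w : vec) (m : nat) :
  mexp_apply n M v w -> (1 <= m)%nat ->
  vnorm n (vsub w (Nat.iter m (euler_step n M (/ INR m)) v))
  <= exp (4 * mbound n M) / (2 * INR m) * vnorm n v.
Proof.
  intros Hw Hm. apply Rle_plus_epsilon. intros eps Heps.
  destruct (Hw eps Heps) as [N0 HN].
  set (N := Nat.max N0 m). pose proof (HN N ltac:(lia)) as HwN.
  rewrite vnorm_sub_comm in HwN.
  pose proof (euler_exp_err n M v m N Hm ltac:(lia)).
  pose proof (vnorm_sub_triangle n w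
    (vsum (S N) (fun j => vscal (RtoC (/ INR (fact j))) (mapply n (mpow n M j) v)))
    (Nat.iter m (euler_step n M (/ INR m)) v)). lra.
Qed.

(** * Uniqueness of power series coefficients *)

Lemma vnorm_term_le (n N l : nat) (f : nat -> vec) : (l < N)%nat ->
  vnorm n (f l) <= vnorm n (vsum N f) + Rsum l (fun p => vnorm n (f p))
                   + Rsum (N - l - 1) (fun j => vnorm n (f (l + 1 + j)%nat)).
Proof.
  intros Hl.
  set (tail := vsum (N - l - 1) (fun j => f (l + 1 + j)%nat)).
  assert (E : f l = vsub (vsub (vsum N f) (vsum l f)) tail).
  { replace N with (S l + (N - l - 1))%nat at 1 by lia. rewrite vsum_split.
    replace (fun j => f (S l + j)%nat) with (fun j => f (l + 1 + j)%nat)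
      by (apply functional_extensionality; intro j; f_equal; lia).
    simpl vsum. fold tail. vext. }
  rewrite E at 1. eapply Rle_trans; [apply vnorm_sub_le|].
  pose proof (vnorm_sub_le n (vsum N f) (vsum l f)).
  pose proof (vnorm_vsum n l f). pose proof (vnorm_vsum n (N - l - 1) (fun j => f (l + 1 + j)%nat)).
  fold tail in H1. lra.
Qed.

Lemma eventually_forall_lt (l : nat) (P : nat -> nat -> Prop) :
  (forall p, (p < l)%nat -> exists m0, forall m, (m0 <= m)%nat -> P p m) ->
  exists m0, forall m, (m0 <= m)%nat -> forall p, (p < l)%nat -> P p m.
Proof.
  induction l; intros H; [exists O; intros; lia|].
  destruct IHl as [m1 H1]; [intros; apply H; lia|].
  destruct (H l ltac:(lia)) as [m2 H2].
  exists (Nat.max m1 m2). intros m Hm p Hp.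
  destruct (Nat.eq_dec p l) as [->|]; [apply H2|apply H1]; lia.
Qed.

Section CoefficientLimit.
Variables (n : nat) (w : nat -> nat -> vec) (W : R).
Hypothesis w_bounded : forall m l, vnorm n (w m l) <= W.
Hypothesis weighted_sums_small : forall r, 0 < r <= 1/2 -> forall eta, 0 < eta ->
  exists m0, forall m, (m0 <= m)%nat -> forall N0, exists N, (N0 <= N)%nat /\
    vnorm n (vsum N (fun p => vscal (RtoC (r ^ p)) (w m p))) <= eta.

Lemma bound_nonneg : 0 <= W.
Proof. exact (Rle_trans _ _ _ (vnorm_nonneg n (w 0 0)) (w_bounded 0 0)). Qed.

Lemma weighted_term_le (r : R) (m N l : nat) : 0 <= r -> (l < N)%nat ->
  r ^ l * vnorm n (w m l)
  <= vnorm n (vsum N (fun p => vscal (RtoC (r ^ p)) (w m p)))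
     + Rsum l (fun p => r ^ p * vnorm n (w m p))
     + Rsum (N - l - 1) (fun j => r ^ (l + 1 + j) * vnorm n (w m (l + 1 + j)%nat)).
Proof.
  intros Hr HlN.
  assert (Hscal : forall p, vnorm n (vscal (RtoC (r ^ p)) (w m p)) = r ^ p * vnorm n (w m p))
    by (intros; rewrite vnorm_scal, Cmod_RtoC, Rabs_pos_eq by (apply pow_le; lra); reflexivity).
  rewrite <- Hscal, (Rsum_ext l _ (fun p => vnorm n (vscal (RtoC (r ^ p)) (w m p)))),
    (Rsum_ext (N - l - 1) _ (fun j => vnorm n (vscal (RtoC (r ^ (l + 1 + j))) (w m (l + 1 + j)%nat))))
    by (intros; symmetry; apply Hscal).
  exact (vnorm_term_le n N l (fun p => vscal (RtoC (r ^ p)) (w m p)) HlN).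
Qed.

Lemma weighted_head_le (r delta : R) (m l : nat) : 0 <= r <= 1 ->
  (forall p, (p < l)%nat -> vnorm n (w m p) <= delta) ->
  Rsum l (fun p => r ^ p * vnorm n (w m p)) <= INR l * delta.
Proof.
  intros Hr Hw. rewrite <- Rsum_const. apply Rsum_le. intros p Hp.
  pose proof (Hw p Hp). pose proof (pow_le r p ltac:(lra)).
  pose proof (pow_incr r 1 p ltac:(lra)). rewrite pow1 in *.
  pose proof (vnorm_nonneg n (w m p)). nra.
Qed.

Lemma weighted_tail_le (r : R) (m l J : nat) : 0 <= r <= 1/2 ->
  Rsum J (fun j => r ^ (l + 1 + j) * vnorm n (w m (l + 1 + j)%nat)) <= r ^ l * (2 * W * r).
Proof.
  intros Hr. pose proof bound_nonneg.
  assert (0 <= r ^ l) by (apply pow_le; lra).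
  eapply Rle_trans with (Rsum J (fun j => r ^ l * r * W * r ^ j)).
  - apply Rsum_le. intros j _. rewrite !pow_add, pow_1.
    pose proof (w_bounded m (l + 1 + j)). pose proof (pow_le r j ltac:(lra)).
    replace (r ^ l * r * W * r ^ j) with (r ^ l * r * r ^ j * W) by ring.
    apply Rmult_le_compat_l; [|auto]. apply Rmult_le_pos; [apply Rmult_le_pos|]; lra.
  - rewrite (Rsum_scal J (r ^ l * r * W) (fun j => r ^ j)). pose proof (Rsum_geom_le r J Hr).
    assert (0 <= r ^ l * r * W) by (apply Rmult_le_pos; [apply Rmult_le_pos|]; lra). nra.
Qed.

(* Once the lower coefficients are small, choosing [r] small makes the tail
   negligible against the [r^l] term. *)
Lemma coefficients_vanish (l : nat) :
  forall eta, 0 < eta -> exists m0, forall m, (m0 <= m)%nat -> vnorm n (w m l) <= eta.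
Proof.
  induction l as [l IH] using (well_founded_induction lt_wf). intros eta Heta.
  pose proof bound_nonneg.
  set (r := Rmin (1/2) (eta / (4 * W + 4))).
  assert (Hr0 : 0 < r) by (apply Rmin_pos; [lra|apply Rdiv_lt_0_compat; lra]).
  assert (Hr1 : r <= 1/2) by apply Rmin_l.
  assert (Hr2 : 2 * W * r <= eta / 2).
  { assert (Hr : r <= eta / (4 * W + 4)) by apply Rmin_r.
    apply (Rmult_le_compat_r (4 * W + 4)) in Hr; [|lra].
    replace (eta / (4 * W + 4) * (4 * W + 4)) with eta in Hr by (field; lra). nra. }
  assert (Hrl : 0 < r ^ l) by (apply pow_lt; auto).
  set (delta := r ^ l * eta / (4 * (INR l + 1))).
  assert (Hdelta : INR l * delta <= r ^ l * eta / 4).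
  { pose proof (pos_INR l). replace (r ^ l * eta / 4) with ((INR l + 1) * delta)
      by (unfold delta; field; lra).
    apply Rmult_le_compat_r; [apply Rmult_le_pos; [nra|]|lra].
    apply Rlt_le, Rinv_0_lt_compat. lra. }
  destruct (eventually_forall_lt l (fun p m => vnorm n (w m p) <= delta)) as [m2 Hm2].
  { intros p Hp. apply IH; auto. apply Rdiv_lt_0_compat; pose proof (pos_INR l); nra. }
  destruct (weighted_sums_small r (conj Hr0 Hr1) (r ^ l * eta / 4)) as [m1 Hm1]; [nra|].
  exists (Nat.max m1 m2). intros m Hm.
  destruct (Hm1 m ltac:(lia) (S l)) as [N [HN Hsum]].
  pose proof (weighted_term_le r m N l ltac:(lra) ltac:(lia)).
  pose proof (weighted_head_le r delta m l ltac:(lra) (Hm2 m ltac:(lia))).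
  pose proof (weighted_tail_le r m l (N - l - 1) ltac:(lra)).
  apply (Rmult_le_reg_l (r ^ l)); auto. nra.
Qed.

End CoefficientLimit.

(** * Bounds on the Taylor coefficients *)

Lemma euler_step_vadd (n : nat) (M : mat) (h : R) (x y : vec) :
  euler_step n M h (vadd x y) = vadd (euler_step n M h x) (euler_step n M h y).
Proof. unfold euler_step. rewrite mapply_vadd. vext. Qed.

Lemma euler_step_vscal (n : nat) (M : mat) (h : R) (a : Cx) (x : vec) :
  euler_step n M h (vscal a x) = vscal a (euler_step n M h x).
Proof. unfold euler_step. rewrite mapply_vscal. vext. Qed.

Lemma exp_le_exp (x y : R) : x <= y -> exp x <= exp y.
Proof. intros [H|H]; [apply Rlt_le, exp_increasing; auto|subst; lra]. Qed.

Lemma exp_pow (x : R) (m : nat) : exp x ^ m = exp (INR m * x).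
Proof.
  induction m; [simpl; rewrite Rmult_0_l, exp_0; reflexivity|].
  simpl pow. rewrite IHm, <- exp_plus, S_INR. f_equal. ring.
Qed.

(* [|x + h A x|^2 = |x|^2 + 2 h Re<A x, x> + h^2 |A x|^2 <= (1 + 2 h mu + h^2 K^2) |x|^2]. *)
Lemma euler_step_norm_le (n : nat) (A : mat) (mu h : R) (x : vec) :
  is_lognorm n A mu -> 0 <= h ->
  vnorm n (euler_step n A h x) <= exp (h * mu + h ^ 2 * mbound n A ^ 2 / 2) * vnorm n x.
Proof.
  intros Hmu Hh. set (K := mbound n A).
  apply pow2_le_reg; [apply Rmult_le_pos; [apply Rlt_le, exp_pos|apply vnorm_nonneg]|].
  rewrite Rpow_mult_distr, exp_pow, !vnorm_sq. unfold euler_step.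
  rewrite vdot_addl, !vdot_addr, !vdot_scall, !vdot_scalr, (vdot_comm n x (mapply n A x)).
  pose proof (lognorm_bound n A mu Hmu x) as Hq. unfold qform in Hq.
  assert (HAx : vdot n (mapply n A x) (mapply n A x) <= K ^ 2 * vdot n x x).
  { rewrite <- !vnorm_sq, <- Rpow_mult_distr. apply pow_incr.
    split; [apply vnorm_nonneg|apply vnorm_mapply_le]. }
  pose proof (exp_ineq1_le (INR 2 * (h * mu + h ^ 2 * K ^ 2 / 2))).
  pose proof (vdot_self_nonneg n x).
  assert (h * vdot n (mapply n A x) x <= h * (mu * vdot n x x)) by (apply Rmult_le_compat_l; auto).
  assert (h ^ 2 * vdot n (mapply n A x) (mapply n A x) <= h ^ 2 * (K ^ 2 * vdot n x x))
    by (apply Rmult_le_compat_l; auto; apply pow2_ge_0).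
  simpl INR in *. nra.
Qed.

Lemma pow_div_fact_le_exp (x : R) (l : nat) : 0 <= x -> x ^ l / INR (fact l) <= exp x.
Proof.
  intros Hx. eapply Rle_trans; [|apply (Rsum_exp_le (S l) x Hx)].
  apply (Rsum_term_le (S l) (fun j => x ^ j / INR (fact j)) l); [|lia].
  intros. apply Rmult_le_pos; [apply pow_le; auto|].
  apply Rlt_le, Rinv_0_lt_compat, lt_0_INR, lt_O_fact.
Qed.

Lemma series_terms_bounded (n : nat) (s : nat -> vec) (U : vec) :
  Vcv n (fun N => vsum (S N) s) U -> exists B, forall p, vnorm n (s p) <= B.
Proof.
  intros Hv. destruct (Hv 1 ltac:(lra)) as [N0 HN].
  exists (2 + Rsum (S N0) (fun p => vnorm n (s p))). intros p.
  pose proof (Rsum_nonneg (S N0) (fun p => vnorm n (s p)) (fun p _ => vnorm_nonneg n (s p))).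
  destruct (le_lt_dec p N0).
  - pose proof (Rsum_term_le (S N0) (fun p => vnorm n (s p)) p
                  (fun p _ => vnorm_nonneg n (s p)) ltac:(lia)). lra.
  - destruct p as [|p]; [lia|].
    pose proof (HN (S p) ltac:(lia)). pose proof (HN p ltac:(lia)).
    replace (s (S p)) with (vsub (vsub (vsum (S (S p)) s) U) (vsub (vsum (S p) s) U))
      by (simpl; vext).
    eapply Rle_trans; [apply vnorm_sub_le|]. lra.
Qed.

Lemma euler_exponent_le (t mu K : R) (m l : nat) : 0 <= t -> (1 <= m)%nat ->
  (INR m - INR l) * (t / INR m * mu + (t / INR m) ^ 2 * K ^ 2 / 2)
  <= t * mu + (INR l * t * Rabs mu + t ^ 2 * K ^ 2 / 2) / INR m.
Proof.
  intros Ht Hm. assert (Hmpos : 0 < INR m) by (apply lt_0_INR; lia).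
  set (h := t / INR m).
  assert (Hh : 0 <= h) by (apply Rmult_le_pos; [lra|apply Rlt_le, Rinv_0_lt_compat; lra]).
  replace ((INR l * t * Rabs mu + t ^ 2 * K ^ 2 / 2) / INR m)
    with (INR l * h * Rabs mu + INR m * (h ^ 2 * K ^ 2 / 2)) by (unfold h; field; lra).
  replace (t * mu) with (INR m * h * mu) by (unfold h; field; lra).
  pose proof (pos_INR l). pose proof (Rle_abs (- mu)). rewrite Rabs_Ropp in *.
  assert (0 <= INR l * (h ^ 2 * K ^ 2 / 2)).
  { apply Rmult_le_pos; [lra|]. apply Rmult_le_pos; [apply Rmult_le_pos; apply pow2_ge_0|lra]. }
  assert (- (INR l * h * mu) <= INR l * h * Rabs mu).
  { replace (- (INR l * h * mu)) with (INR l * h * (- mu)) by ring.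
    apply Rmult_le_compat_l; [apply Rmult_le_pos|]; lra. }
  nra.
Qed.

Section EulerCoefficients.
Variables (n : nat) (A0 A1 : mat) (u0 : vec) (t : R) (u : Cx -> vec) (c : nat -> vec) (mu a : R).
Hypothesis Ht : 0 <= t.
Hypothesis Hu : forall e, mexp_apply n (mscal (RtoC t) (madd A0 (mscal e A1))) u0 (u e).
Hypothesis Hc : forall e, Vcv n (fun N => vsum (S N) (fun l => vscal (Cpow e l) (c l))) (u e).
Hypothesis Hmu : is_lognorm n A0 mu.
Hypothesis HA1 : is_opnorm n A1 a.

Let K := mbound n A0.
Let Fstep (h : R) (x : vec) : vec := vscal (RtoC h) (mapply n A1 x).

Definition euler_coef (m l : nat) : vec :=
  pcoef (euler_step n A0 (t / INR m)) (Fstep (t / INR m)) u0 m l.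

Lemma Fstep_vadd (h : R) (x y : vec) : Fstep h (vadd x y) = vadd (Fstep h x) (Fstep h y).
Proof. unfold Fstep. rewrite mapply_vadd. vext. Qed.

Lemma Fstep_vscal (h : R) (b : Cx) (x : vec) : Fstep h (vscal b x) = vscal b (Fstep h x).
Proof. unfold Fstep. rewrite mapply_vscal. vext. Qed.

Lemma euler_expand (e : Cx) (m L : nat) : (m < L)%nat ->
  Nat.iter m (euler_step n (mscal (RtoC t) (madd A0 (mscal e A1))) (/ INR m)) u0
  = vsum L (fun l => vscal (Cpow e l) (euler_coef m l)).
Proof.
  intros HmL. set (h := t / INR m).
  replace (euler_step n (mscal (RtoC t) (madd A0 (mscal e A1))) (/ INR m))
    with (pstep (euler_step n A0 h) (Fstep h) e).
  2:{ apply functional_extensionality; intro x. unfold pstep, euler_step, Fstep, h.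
      rewrite mapply_mscal, mapply_madd, mapply_mscal.
      apply functional_extensionality; intro; apply Cx_ext; cxsimpl; unfold Rdiv; ring. }
  apply pstep_iter_expand; auto using euler_step_vadd, euler_step_vscal, Fstep_vadd, Fstep_vscal.
Qed.

Lemma euler_coef_bound_exp (m l : nat) : (1 <= m)%nat ->
  vnorm n (euler_coef m l) <= binom m l * (t / INR m) ^ l * a ^ l
    * exp ((INR m - INR l) * (t / INR m * mu + (t / INR m) ^ 2 * K ^ 2 / 2)) * vnorm n u0.
Proof.
  intros Hm. set (h := t / INR m). set (g := h * mu + h ^ 2 * K ^ 2 / 2).
  assert (Hh : 0 <= h) by (apply Rmult_le_pos; [|apply Rlt_le, Rinv_0_lt_compat, lt_0_INR]; lia || lra).
  pose proof (opnorm_nonneg n A1 a HA1).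
  eapply Rle_trans.
  { apply (pcoef_bound n _ _ u0 (exp g) (h * a) m l (exp_pos g));
      [apply Rmult_le_pos; auto|intros; apply euler_step_norm_le; auto|].
    intros x. unfold Fstep. rewrite vnorm_scal, Cmod_RtoC, Rabs_pos_eq, Rmult_assoc by auto.
    apply Rmult_le_compat_l; auto. apply opnorm_bound; auto. }
  right. unfold Rdiv at 1. rewrite !Rpow_mult_distr, (pow_inv (exp g)).
  rewrite !exp_pow, <- exp_Ropp.
  replace ((INR m - INR l) * g) with (INR m * g + - (INR l * g)) by ring.
  rewrite exp_plus. ring.
Qed.

Lemma euler_coef_bound (m l : nat) : (1 <= m)%nat ->
  vnorm n (euler_coef m l) <= (t * a) ^ l / INR (fact l)
    * exp (t * mu + (INR l * t * Rabs mu + t ^ 2 * K ^ 2 / 2) / INR m) * vnorm n u0.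
Proof.
  intros Hm. eapply Rle_trans; [apply euler_coef_bound_exp; auto|].
  pose proof (vnorm_nonneg n u0). pose proof (opnorm_nonneg n A1 a HA1).
  pose proof (pow_le a l H0).
  apply Rmult_le_compat_r; auto. rewrite Rpow_mult_distr.
  replace (t ^ l * a ^ l / INR (fact l)) with (t ^ l / INR (fact l) * a ^ l) by (unfold Rdiv; ring).
  apply Rmult_le_compat; try (apply Rlt_le, exp_pos).
  - apply Rmult_le_pos; auto. apply Rmult_le_pos; [apply binom_nonneg|].
    apply pow_le, Rmult_le_pos; [lra|apply Rlt_le, Rinv_0_lt_compat, lt_0_INR; lia].
  - apply Rmult_le_compat_r; auto. apply binom_mul_pow_le; auto.
  - apply exp_le_exp, euler_exponent_le; auto.
Qed.

Lemma euler_coef_uniform (m l : nat) : (1 <= m)%nat ->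
  vnorm n (euler_coef m l)
  <= exp (t * a) * exp (t * mu + (t * Rabs mu + t ^ 2 * K ^ 2 / 2)) * vnorm n u0.
Proof.
  intros Hm. pose proof (vnorm_nonneg n u0). pose proof (opnorm_nonneg n A1 a HA1).
  destruct (le_lt_dec l m) as [Hlm|Hlm].
  2:{ unfold euler_coef. rewrite pcoef_gt, vnorm_zero by (auto using euler_step_vscal, Fstep_vscal).
      apply Rmult_le_pos; [|auto]. apply Rmult_le_pos; apply Rlt_le, exp_pos. }
  eapply Rle_trans; [apply euler_coef_bound; auto|].
  apply Rmult_le_compat_r; auto.
  apply Rmult_le_compat; [| apply Rlt_le, exp_pos | apply pow_div_fact_le_exp; nra |].
  { apply Rmult_le_pos; [apply pow_le; nra|apply Rlt_le, Rinv_0_lt_compat, lt_0_INR, lt_O_fact]. }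
  apply exp_le_exp, Rplus_le_compat_l.
  assert (Hmpos : 1 <= INR m) by (apply (le_INR 1); auto).
  apply le_INR in Hlm. pose proof (pos_INR l). pose proof (Rabs_pos mu).
  assert (0 <= t ^ 2 * K ^ 2 / 2) by (pose proof (mbound_nonneg n A0); unfold K; nra).
  apply (Rmult_le_reg_r (INR m)); [lra|]. unfold Rdiv. rewrite Rmult_assoc, Rinv_l by lra.
  assert (INR l * t * Rabs mu <= INR m * t * Rabs mu)
    by (apply Rmult_le_compat_r; [auto|apply Rmult_le_compat_r; lra]).
  nra.
Qed.

Lemma c_terms_bounded : exists B, forall p, vnorm n (c p) <= B.
Proof.
  destruct (series_terms_bounded n _ _ (Hc (RtoC 1))) as [B HB].
  exists B. intros p. specialize (HB p).
  rewrite vnorm_scal, Cmod_Cpow, Cmod_RtoC, Rabs_R1, pow1, Rmult_1_l in HB. auto.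
Qed.

Lemma euler_sums_approach_c (r : R) : 0 < r <= 1/2 -> forall eta, 0 < eta ->
  exists m0, forall m, (m0 <= m)%nat -> forall N0, exists N, (N0 <= N)%nat /\
    vnorm n (vsum N (fun p => vscal (RtoC (r ^ p)) (vsub (c p) (euler_coef (S m) p)))) <= eta.
Proof.
  intros Hr eta Heta.
  set (Me := mscal (RtoC t) (madd A0 (mscal (RtoC r) A1))).
  destruct (div_INR_eventually_le (exp (4 * mbound n Me) / 2 * vnorm n u0) (eta / 2))
    as [m0 Hsmall]; [lra|].
  exists m0. intros m Hm N0.
  destruct (Hc (RtoC r) (eta / 2) ltac:(lra)) as [N1 HN1].
  set (N' := Nat.max N0 (Nat.max N1 (S m))). exists (S N'). split; [lia|].
  rewrite (vsum_ext _ _ (fun p => vsub (vscal (Cpow (RtoC r) p) (c p))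
                                       (vscal (Cpow (RtoC r) p) (euler_coef (S m) p))))
    by (intros; rewrite Cpow_RtoC; vext).
  rewrite vsum_sub, <- euler_expand by lia.
  eapply Rle_trans; [apply (vnorm_sub_triangle n _ (u (RtoC r)))|].
  pose proof (HN1 N' ltac:(lia)).
  pose proof (mexp_euler_err n Me u0 (u (RtoC r)) (S m) (Hu (RtoC r)) ltac:(lia)).
  pose proof (Hsmall (S m) ltac:(lia)).
  assert (0 < INR (S m)) by (apply lt_0_INR; lia).
  replace (exp (4 * mbound n Me) / (2 * INR (S m)) * vnorm n u0)
    with (exp (4 * mbound n Me) / 2 * vnorm n u0 / INR (S m)) in * by (field; lra).
  fold Me. lra.
Qed.

Lemma euler_coef_cv (l : nat) : Un_cv (fun j => vnorm n (vsub (c l) (euler_coef (S j) l))) 0.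
Proof.
  destruct c_terms_bounded as [B HB].
  intros eps Heps.
  destruct (coefficients_vanish n (fun m p => vsub (c p) (euler_coef (S m) p))
              (B + exp (t * a) * exp (t * mu + (t * Rabs mu + t ^ 2 * K ^ 2 / 2)) * vnorm n u0))
    with (l := l) (eta := eps / 2) as [m0 Hm0]; [| |lra|].
  - intros m p. eapply Rle_trans; [apply vnorm_sub_le|].
    pose proof (HB p). pose proof (euler_coef_uniform (S m) p ltac:(lia)). lra.
  - exact euler_sums_approach_c.
  - exists m0. intros j Hj. unfold Rdist. rewrite Rminus_0_r, Rabs_pos_eq by apply vnorm_nonneg.
    pose proof (Hm0 j Hj). lra.
Qed.

Lemma c_bound (l : nat) :
  vnorm n (c l) <= (t * a) ^ l / INR (fact l) * exp (t * mu) * vnorm n u0.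
Proof.
  set (X := (t * a) ^ l / INR (fact l)).
  set (C := INR l * t * Rabs mu + t ^ 2 * K ^ 2 / 2).
  assert (Hinv : Un_cv (fun j => C / INR (S j)) 0).
  { apply (Un_cv_le_mult _ _ _ (Rabs C) Un_cv_inv_succ). intros j.
    rewrite Rminus_0_r, S_INR. unfold Rdiv. rewrite Rabs_mult, (Rabs_pos_eq (/ (INR j + 1))); [lra|].
    apply Rlt_le, Rinv_0_lt_compat. pose proof (pos_INR j). lra. }
  apply (@Rle_cv_lim (fun j => vnorm n (euler_coef (S j) l))
                     (fun j => X * exp (t * mu + C / INR (S j)) * vnorm n u0)).
  - intros j. apply euler_coef_bound. lia.
  - apply (Un_cv_le_mult _ _ _ 1 (euler_coef_cv l)). intros j.
    rewrite Rmult_1_l, (vnorm_sub_comm n (c l)). apply vnorm_reverse_triangle.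
  - apply CV_mult; [apply CV_mult; [apply Un_cv_const|]|apply Un_cv_const].
    apply continuity_seq; [apply derivable_continuous_pt, derivable_pt_exp|].
    pose proof (CV_plus _ _ _ _ (Un_cv_const (t * mu)) Hinv) as Hsum.
    rewrite Rplus_0_r in Hsum. exact Hsum.
Qed.

End EulerCoefficients.

(** * The remainder estimate *)

Lemma series_tail_le (n k : nat) (f : nat -> vec) (U : vec) (B : R) :
  Vcv n (fun N => vsum (S N) f) U ->
  (forall J, Rsum J (fun j => vnorm n (f (k + j)%nat)) <= B) ->
  vnorm n (vsub U (vsum k f)) <= B.
Proof.
  intros HU HB. apply Rle_plus_epsilon. intros eps Heps.
  destruct (HU eps Heps) as [N0 HN0]. set (N := Nat.max N0 k).
  replace (vsub U (vsum k f))
    with (vadd (vsub U (vsum (S N) f)) (vsum (S N - k) (fun j => f (k + j)%nat))).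
  2:{ replace (S N) with (k + (S N - k))%nat at 1 by lia. rewrite vsum_split. vext. }
  eapply Rle_trans; [apply vnorm_triangle|].
  pose proof (HN0 N ltac:(lia)). rewrite vnorm_sub_comm in H.
  pose proof (vnorm_vsum n (S N - k) (fun j => f (k + j)%nat)). pose proof (HB (S N - k)%nat).
  lra.
Qed.

Lemma fact_mul_le (k j : nat) : INR (fact k) * INR (fact j) <= INR (fact (k + j)).
Proof.
  rewrite <- mult_INR. apply le_INR. induction j; [rewrite Nat.add_0_r; simpl; lia|].
  rewrite Nat.add_succ_r. simpl fact. nia.
Qed.

Lemma Rsum_exp_tail_le (x : R) (k J : nat) : 0 <= x ->
  Rsum J (fun j => x ^ (k + j) / INR (fact (k + j))) <= x ^ k / INR (fact k) * exp x.
Proof.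
  intros Hx. assert (Hk : 0 < INR (fact k)) by (apply lt_0_INR, lt_O_fact).
  eapply Rle_trans with (Rsum J (fun j => x ^ k / INR (fact k) * (x ^ j / INR (fact j)))).
  - apply Rsum_le. intros j _. rewrite pow_add.
    assert (Hj : 0 < INR (fact j)) by (apply lt_0_INR, lt_O_fact).
    pose proof (fact_mul_le k j).
    assert (0 <= x ^ k * x ^ j) by (apply Rmult_le_pos; apply pow_le; auto).
    replace (x ^ k / INR (fact k) * (x ^ j / INR (fact j)))
      with ((x ^ k * x ^ j) / (INR (fact k) * INR (fact j))) by (field; lra).
    apply Rmult_le_compat_l; auto.
    apply Rinv_le_contravar; auto. apply Rmult_lt_0_compat; auto.
  - rewrite Rsum_scal. apply Rmult_le_compat_l; [|apply Rsum_exp_le; auto].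
    apply Rmult_le_pos; [apply pow_le; auto|apply Rlt_le, Rinv_0_lt_compat; auto].
Qed.

Lemma power_series_remainder_le (n k : nat) (eps : Cx) (c : nat -> vec) (U : vec) (s Y : R) :
  0 <= s -> Vcv n (fun N => vsum (S N) (fun l => vscal (Cpow eps l) (c l))) U ->
  (forall l, vnorm n (c l) <= s ^ l / INR (fact l) * Y) ->
  vnorm n (vsub U (vsum k (fun l => vscal (Cpow eps l) (c l))))
  <= (Cmod eps * s) ^ k / INR (fact k) * exp (Cmod eps * s) * Y.
Proof.
  intros Hs HU Hc. pose proof (Cmod_nonneg eps).
  assert (HY : 0 <= Y) by (pose proof (Hc O); pose proof (vnorm_nonneg n (c O)); simpl in *; lra).
  set (x := Cmod eps * s). assert (Hx : 0 <= x) by (apply Rmult_le_pos; auto).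
  apply (series_tail_le n k _ _ _ HU). intros J.
  rewrite Rmult_comm. eapply Rle_trans; [|apply Rmult_le_compat_l; [auto|apply Rsum_exp_tail_le; auto]].
  rewrite <- Rsum_scal. apply Rsum_le. intros j _.
  rewrite vnorm_scal, Cmod_Cpow.
  eapply Rle_trans; [apply Rmult_le_compat_l; [apply pow_le; auto|apply Hc]|].
  right. unfold x. rewrite Rpow_mult_distr. unfold Rdiv. ring.
Qed.

Theorem mainTheorem6 (n : nat) (A0 A1 : mat) (u0 : vec) (t : R) (eps : Cx) (k : nat)
  (u : Cx -> vec) (c : nat -> vec) (muA0 nA1 ntA1 : R)
  (Ht : 0 <= t) (Hk : (1 <= k)%nat)
  (Hu : forall e : Cx, mexp_apply n (mscal (RtoC t) (madd A0 (mscal e A1))) u0 (u e))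
  (Hc : forall e : Cx, Vcv n (fun N => vsum (S N) (fun l => vscal (Cpow e l) (c l))) (u e))
  (Hmu : is_lognorm n A0 muA0)
  (HA1 : is_opnorm n A1 nA1)
  (HtA1 : is_opnorm n (mscal (RtoC t) A1) ntA1) :
  vnorm n (vsub (u eps) (vsum k (fun l => vscal (Cpow eps l) (c l))))
  <= exp (t * (muA0 + Cmod eps * nA1)) * (Cmod eps * ntA1) ^ k / INR (fact k)
     * vnorm n u0.
Proof.
  pose proof (opnorm_mscal_ge n A1 t nA1 ntA1 Ht HA1 HtA1).
  pose proof (opnorm_nonneg n A1 nA1 HA1). pose proof (Cmod_nonneg eps).
  eapply Rle_trans.
  { apply (power_series_remainder_le n k eps c (u eps) (t * nA1) (exp (t * muA0) * vnorm n u0));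
      [nra|apply Hc|].
    intros l. rewrite <- Rmult_assoc. apply (c_bound n A0 A1 u0 t u c); auto. }
  set (x := Cmod eps * (t * nA1)). set (E := exp x * exp (t * muA0) * / INR (fact k) * vnorm n u0).
  replace (x ^ k / INR (fact k) * exp x * (exp (t * muA0) * vnorm n u0)) with (E * x ^ k)
    by (unfold E, Rdiv; ring).
  replace (exp (t * (muA0 + Cmod eps * nA1))) with (exp x * exp (t * muA0))
    by (rewrite <- exp_plus; unfold x; f_equal; ring).
  replace (exp x * exp (t * muA0) * (Cmod eps * ntA1) ^ k / INR (fact k) * vnorm n u0)
    with (E * (Cmod eps * ntA1) ^ k) by (unfold E, Rdiv; ring).
  apply Rmult_le_compat_l.
  - pose proof (Rinv_0_lt_compat _ (lt_0_INR _ (lt_O_fact k))).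
    pose proof (exp_pos x). pose proof (exp_pos (t * muA0)). pose proof (vnorm_nonneg n u0).
    unfold E. repeat apply Rmult_le_pos; lra.
  - apply pow_incr. split; [repeat apply Rmult_le_pos; auto|apply Rmult_le_compat_l; auto].
Qed.
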